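(* Let $f:S^1\to S^1$ be a Morse-Smale diffeomorphism. Then: (i) $2^{f}$ has uncountably many periodic points of each period $k\geq 1$; (ii) $R(2^{f}) \neq \Omega(2^{f}) = \overline{Per(2^{f})}= CR(2^{f})$; (iii) $2^f$ is not transitive.
   Context: A $C^r$ diffeomorphism ($r\ge1$) of a compact connected manifold without boundary is Morse-Smale if its nonwandering set consists of finitely many periodic points, all hyperbolic, with mutually transversal stable and unstable manifolds. For a compact metric space $X$, $2^X$ is the hyperspace of nonempty closed subsets of $X$ with the Hausdorff metric, and $2^f(A)=f(A)$. For a map $g$, $R(g)$, $\Omega(g)$, $Per(g)$ and $CR(g)$ denote respectively the sets of recurrent, nonwandering, periodic and chain recurrent points of $g$. *)

From Stdlib Require Import Reals List.
From Coquelicot Require Import Coquelicot.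
Open Scope R_scope.

Definition periodic_pt {X : Type} (Sp : X -> Prop) (g : X -> X) (x : X) : Prop :=
  Sp x /\ exists n : nat, (0 < n)%nat /\ Nat.iter n g x = x.

Definition has_period {X : Type} (Sp : X -> Prop) (g : X -> X) (k : nat) (x : X) : Prop :=
  Sp x /\ (0 < k)%nat /\ Nat.iter k g x = x /\
  forall j : nat, (0 < j)%nat -> (j < k)%nat -> Nat.iter j g x <> x.

Definition recurrent {X : Type} (Sp : X -> Prop) (d : X -> X -> R) (g : X -> X) (x : X) : Prop :=
  Sp x /\ forall e, 0 < e -> exists n : nat, (0 < n)%nat /\ d (Nat.iter n g x) x < e.

Definition nonwandering {X : Type} (Sp : X -> Prop) (d : X -> X -> R) (g : X -> X) (x : X) : Prop :=
  Sp x /\ forall e, 0 < e -> exists (n : nat) (y : X),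
    (0 < n)%nat /\ Sp y /\ d y x < e /\ d (Nat.iter n g y) x < e.

Definition in_closure_per {X : Type} (Sp : X -> Prop) (d : X -> X -> R) (g : X -> X) (x : X) : Prop :=
  Sp x /\ forall e, 0 < e -> exists y, periodic_pt Sp g y /\ d x y < e.

Definition chain_recurrent {X : Type} (Sp : X -> Prop) (d : X -> X -> R) (g : X -> X) (x : X) : Prop :=
  Sp x /\ forall e, 0 < e -> exists (n : nat) (c : nat -> X),
    (0 < n)%nat /\ c O = x /\ c n = x /\
    forall i : nat, (i < n)%nat -> Sp (c i) /\ d (g (c i)) (c (S i)) < e.

(* topological transitivity: for all nonempty open U, V, g^n(U) meets V for some n >= 1
   (stated with balls, which form a base of the topology) *)
Definition transitive {X : Type} (Sp : X -> Prop) (d : X -> X -> R) (g : X -> X) : Prop :=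
  forall x y e, Sp x -> Sp y -> 0 < e -> exists (n : nat) (z : X),
    (0 < n)%nat /\ Sp z /\ d z x < e /\ d (Nat.iter n g z) y < e.

Definition countable {X : Type} (P : X -> Prop) : Prop :=
  exists h : X -> nat, forall x y, P x -> P y -> h x = h y -> x = y.

Definition S1 : Type := {x : R | x >= 0 /\ x < 1}.

Definition proj (x : R) : S1 := exist _ (frac_part x) (base_fp x).

Definition dS (a b : S1) : R :=
  let t := Rabs (proj1_sig a - proj1_sig b) in Rmin t (1 - t).

Definition whole_circle (x : S1) : Prop := True.

Definition closedS (A : S1 -> Prop) : Prop :=
  forall x, (forall e, 0 < e -> exists y, A y /\ dS x y < e) -> A x.

Definition hyper (A : S1 -> Prop) : Prop := closedS A /\ exists x, A x.

Definition dist_to (x : S1) (B : S1 -> Prop) : R :=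
  real (Glb_Rbar (fun r => exists b, B b /\ r = dS x b)).

Definition hausdorff (A B : S1 -> Prop) : R :=
  Rmax (real (Lub_Rbar (fun r => exists a, A a /\ r = dist_to a B)))
       (real (Lub_Rbar (fun r => exists b, B b /\ r = dist_to b A))).

Definition hyper_map (f : S1 -> S1) (A : S1 -> Prop) : S1 -> Prop :=
  fun y => exists x, A x /\ f x = y.

Definition C1_diffeo_lift (F : R -> R) (f : S1 -> S1) : Prop :=
  (forall x, ex_derive F x) /\
  (forall x, continuous (Derive F) x) /\
  (forall x, Derive F x <> 0) /\
  ((forall x, F (x + 1) = F x + 1) \/ (forall x, F (x + 1) = F x - 1)) /\
  (forall x, f (proj x) = proj (F x)).

Definition hyperbolic_pt (F : R -> R) (f : S1 -> S1) (p : S1) : Prop :=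
  forall (n : nat) (x : R), (0 < n)%nat -> Nat.iter n f p = p -> proj x = p ->
    Rabs (Derive (Nat.iter n F) x) <> 1.

Definition Ws (f : S1 -> S1) (p x : S1) : Prop :=
  is_lim_seq (fun n => dS (Nat.iter n f x) (Nat.iter n f p)) (Finite 0).

Definition Wu (f : S1 -> S1) (p x : S1) : Prop :=
  exists xs ps : nat -> S1, xs O = x /\ ps O = p /\
    (forall n, f (xs (S n)) = xs n) /\ (forall n, f (ps (S n)) = ps n) /\
    is_lim_seq (fun n => dS (xs n) (ps n)) (Finite 0).

Definition interiorS (W : S1 -> Prop) (x : S1) : Prop :=
  exists e, 0 < e /\ forall y, dS x y < e -> W y.

(* transversality in dimension 1: at an intersection point, the tangent spaces
   span T_x S^1, i.e. one of the two manifolds is 1-dimensional (open) near x *)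
Definition transversal (f : S1 -> S1) : Prop :=
  forall p q x, periodic_pt whole_circle f p -> periodic_pt whole_circle f q ->
    Wu f p x -> Ws f q x -> interiorS (Wu f p) x \/ interiorS (Ws f q) x.

Definition MorseSmale (f : S1 -> S1) : Prop :=
  exists F : R -> R, C1_diffeo_lift F f /\
    (exists l : list S1, forall x, nonwandering whole_circle dS f x -> In x l) /\
    (forall x, nonwandering whole_circle dS f x -> periodic_pt whole_circle f x) /\
    (forall p, periodic_pt whole_circle f p -> hyperbolic_pt F f p) /\
    transversal f.

From Stdlib Require Import Reals Lra Lia ZArith List Classical ClassicalEpsilon.
From Stdlib Require Import FunctionalExtensionality PropExtensionality ProofIrrelevance Rtopology.
From Coquelicot Require Import Coquelicot.
Open Scope R_scope.

(* Replacing f by an even iterate g = f^N fixing every periodic point, g has an increasing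
   degree-one lift all of whose fixed points have derivative different from 1.  On the line
   this forces every non-fixed point to be pushed, forwards and backwards, into arbitrarily
   short intervals around fixed points that g maps into themselves with a margin; projected
   to the circle these "traps" absorb orbits and pseudo-orbits alike.  Since Per(f) is
   finite, some w has a ball B(w, r) whose points never return to it.

   (iii) The singleton {w} never comes back near itself under 2^f.
   (i) For x in B(w, r), the closure of the two-sided f^k-orbit of x is fixed by (2^f)^k but
   by no smaller iterate, and distinct x give distinct sets; an interval is uncountable.
   (ii) {w} u Per(f) is nonwandering, since a far image and a far preimage of w lie in traps
   next to periodic points, but it is not recurrent.  Closure of Per <= Omega <= CR holds for
   any continuous map.  Conversely, pseudo-orbits of a chain recurrent A end up in traps, so the
   closure of the two-sided f^K-orbits of a finite net of A is a periodic set close to A. *)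

(** * The circle *)

Lemma S1_val_inj (a b : S1) : proj1_sig a = proj1_sig b -> a = b.
Proof. destruct a as [a Ha], b as [b Hb]; simpl; intros ->; f_equal; apply proof_irrelevance. Qed.

Lemma S1_val_bounds (a : S1) : 0 <= proj1_sig a < 1.
Proof. destruct a as [a [H1 H2]]; simpl; lra. Qed.

Lemma frac_part_addZ (x : R) (k : Z) : frac_part (x + IZR k) = frac_part x.
Proof.
  unfold frac_part.
  assert (Hk : Int_part (x + IZR k) = (Int_part x + k)%Z).
  { symmetry; apply Int_part_spec. rewrite plus_IZR.
    pose proof (base_Int_part x); lra. }
  rewrite Hk, plus_IZR; ring.
Qed.

Lemma frac_part_id (x : R) : 0 <= x < 1 -> frac_part x = x.
Proof.
  intros Hx. unfold frac_part.
  replace (Int_part x) with 0%Z by (apply Int_part_spec; simpl; lra).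
  simpl; ring.
Qed.

Lemma proj_addZ (x : R) (k : Z) : proj (x + IZR k) = proj x.
Proof. apply S1_val_inj; apply frac_part_addZ. Qed.

Lemma proj_subZ (x : R) (k : Z) : proj (x - IZR k) = proj x.
Proof. rewrite <- (proj_addZ x (- k)), opp_IZR; f_equal; ring. Qed.

Lemma proj_val (a : S1) : proj (proj1_sig a) = a.
Proof. apply S1_val_inj, frac_part_id, S1_val_bounds. Qed.

Lemma proj_eq_iff (p q : R) : proj p = proj q <-> exists k : Z, p = q + IZR k.
Proof.
  split.
  - intros Hpq. exists (Int_part p - Int_part q)%Z. rewrite minus_IZR.
    assert (Hfr : frac_part p = frac_part q) by exact (f_equal (@proj1_sig _ _) Hpq).
    unfold frac_part in Hfr; lra.
  - intros [k ->]. apply proj_addZ.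
Qed.

Lemma dS_proj_attained (p q : R) : exists k : Z, Rabs (p - q - IZR k) = dS (proj p) (proj q).
Proof.
  unfold dS; simpl.
  pose proof (base_fp p) as Hp. pose proof (base_fp q) as Hq.
  set (k0 := (Int_part p - Int_part q)%Z).
  assert (D : p - q - IZR k0 = frac_part p - frac_part q)
    by (unfold k0, frac_part; rewrite minus_IZR; ring).
  set (a := frac_part p) in *. set (b := frac_part q) in *.
  unfold Rmin. destruct (Rle_dec (Rabs (a - b)) (1 - Rabs (a - b))).
  - exists k0. rewrite D. reflexivity.
  - destruct (Rle_dec 0 (a - b)).
    + exists (k0 + 1)%Z. rewrite plus_IZR, (Rabs_pos_eq (a - b)) by lra.
      rewrite Rabs_left by lra. lra.
    + exists (k0 - 1)%Z. rewrite minus_IZR, (Rabs_left (a - b)) by lra.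
      rewrite Rabs_pos_eq by lra. lra.
Qed.

Lemma dS_proj_le (p q : R) : dS (proj p) (proj q) <= Rabs (p - q).
Proof.
  unfold dS; simpl.
  pose proof (base_fp p) as Hp. pose proof (base_fp q) as Hq.
  set (m := (Int_part p - Int_part q)%Z).
  assert (D : p - q = frac_part p - frac_part q + IZR m)
    by (unfold m, frac_part; rewrite minus_IZR; ring).
  set (a := frac_part p) in *. set (b := frac_part q) in *.
  rewrite D. destruct (Z.lt_trichotomy m 0) as [Hm|[Hm|Hm]].
  - assert (IZR m <= -1) by (apply IZR_le; lia).
    eapply Rle_trans; [apply Rmin_r|].
    unfold Rabs; repeat destruct Rcase_abs; lra.
  - rewrite Hm, Rplus_0_r. apply Rmin_l.
  - assert (IZR m >= 1) by (apply Rle_ge, IZR_le; lia).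
    eapply Rle_trans; [apply Rmin_r|].
    unfold Rabs; repeat destruct Rcase_abs; lra.
Qed.

Lemma dS_lift (x y : S1) (p : R) : proj p = x -> exists q, proj q = y /\ Rabs (q - p) = dS y x.
Proof.
  intros <-. destruct (dS_proj_attained (proj1_sig y) p) as [k Hk].
  exists (proj1_sig y - IZR k). rewrite proj_subZ, proj_val. split; [reflexivity|].
  rewrite proj_val in Hk. rewrite <- Hk. f_equal. ring.
Qed.

Lemma dS_sym (x y : S1) : dS x y = dS y x.
Proof. unfold dS. rewrite Rabs_minus_sym. reflexivity. Qed.

Lemma dS_ge0 (x y : S1) : 0 <= dS x y.
Proof.
  unfold dS. pose proof (S1_val_bounds x); pose proof (S1_val_bounds y).
  apply Rmin_glb; [apply Rabs_pos|]. unfold Rabs; destruct Rcase_abs; lra.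
Qed.

Lemma dS_xx (x : S1) : dS x x = 0.
Proof. unfold dS. rewrite Rminus_diag, Rabs_R0. apply Rmin_left. lra. Qed.

Lemma dS_eq0 (x y : S1) : dS x y = 0 -> x = y.
Proof.
  unfold dS. intros H. pose proof (S1_val_bounds x); pose proof (S1_val_bounds y).
  apply S1_val_inj. unfold Rmin in H. destruct Rle_dec.
  - apply Rabs_eq_0 in H. lra.
  - unfold Rabs in *; destruct Rcase_abs; lra.
Qed.

Lemma dS_small_eq (x y : S1) : (forall e, 0 < e -> dS x y < e) -> x = y.
Proof.
  intros H. apply dS_eq0. destruct (Rle_lt_or_eq_dec _ _ (dS_ge0 x y)) as [Hlt|]; auto.
  specialize (H _ Hlt). lra.
Qed.

Lemma dS_triangle (x y z : S1) : dS x z <= dS x y + dS y z.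
Proof.
  destruct (dS_lift y x (proj1_sig y) (proj_val y)) as [x' [<- Ex]].
  destruct (dS_lift y z (proj1_sig y) (proj_val y)) as [z' [<- Ez]].
  eapply Rle_trans; [apply dS_proj_le|].
  rewrite (dS_sym y), <- Ex, <- Ez.
  replace (x' - z') with ((x' - proj1_sig y) + - (z' - proj1_sig y)) by ring.
  eapply Rle_trans; [apply Rabs_triang|]. rewrite Rabs_Ropp. lra.
Qed.

Lemma dS_le_half (x y : S1) : dS x y <= 1/2.
Proof. unfold dS, Rmin. destruct Rle_dec; lra. Qed.

(** * The Hausdorff distance *)

Lemma Glb_Rbar_real (E : R -> Prop) (lo x0 : R) :
  E x0 -> (forall x, E x -> lo <= x) ->
  (forall x, E x -> real (Glb_Rbar E) <= x) /\
  (forall r, (forall x, E x -> r <= x) -> r <= real (Glb_Rbar E)).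
Proof.
  intros H0 Hlo. destruct (Glb_Rbar_correct E) as [Hlb Hg].
  assert (Hlo' : Rbar_le lo (Glb_Rbar E)) by (apply Hg; intros x Hx; apply Hlo, Hx).
  assert (Hup : Rbar_le (Glb_Rbar E) x0) by (apply Hlb, H0).
  destruct (Glb_Rbar E) as [g| |]; simpl in *; try contradiction.
  split.
  - intros x Hx. exact (Hlb x Hx).
  - intros r Hr. apply (Hg (Finite r)). intros x Hx. apply Hr, Hx.
Qed.

Lemma Lub_Rbar_real (E : R -> Prop) (hi x0 : R) :
  E x0 -> (forall x, E x -> x <= hi) ->
  (forall x, E x -> x <= real (Lub_Rbar E)) /\
  (forall r, (forall x, E x -> x <= r) -> real (Lub_Rbar E) <= r).
Proof.
  intros H0 Hhi. destruct (Lub_Rbar_correct E) as [Hub Hg].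
  assert (Hhi' : Rbar_le (Lub_Rbar E) hi) by (apply Hg; intros x Hx; apply Hhi, Hx).
  assert (Hlo : Rbar_le x0 (Lub_Rbar E)) by (apply Hub, H0).
  destruct (Lub_Rbar E) as [g| |]; simpl in *; try contradiction.
  split.
  - intros x Hx. exact (Hub x Hx).
  - intros r Hr. apply (Hg (Finite r)). intros x Hx. apply Hr, Hx.
Qed.

Definition nonempty (A : S1 -> Prop) := exists a, A a.

Lemma dist_to_spec (x : S1) (B : S1 -> Prop) : nonempty B ->
  (forall b, B b -> dist_to x B <= dS x b) /\
  (forall r, (forall b, B b -> r <= dS x b) -> r <= dist_to x B) /\
  dist_to x B <= 1/2.
Proof.
  intros [b0 Hb0]. unfold dist_to.
  destruct (Glb_Rbar_real (fun r => exists b, B b /\ r = dS x b) 0 (dS x b0)) as [H1 H2].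
  - exists b0; auto.
  - intros r [b [_ ->]]. apply dS_ge0.
  - split; [|split].
    + intros b Hb. apply H1. exists b; auto.
    + intros r Hr. apply H2. intros y [b [Hb ->]]. auto.
    + eapply Rle_trans; [apply H1; exists b0; split; eauto|]. apply dS_le_half.
Qed.

Lemma dist_to_lt (x : S1) (B : S1 -> Prop) r : nonempty B -> dist_to x B < r ->
  exists b, B b /\ dS x b < r.
Proof.
  intros HB Hd. destruct (dist_to_spec x B HB) as [_ [Hglb _]].
  apply NNPP; intros Hn. assert (r <= dist_to x B); [|lra].
  apply Hglb. intros b Hb. apply Rnot_lt_le. intros Hl. apply Hn. exists b; auto.
Qed.

Definition excess (A B : S1 -> Prop) := real (Lub_Rbar (fun r => exists a, A a /\ r = dist_to a B)).

Lemma excess_spec (A B : S1 -> Prop) : nonempty A -> nonempty B ->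
  (forall a, A a -> dist_to a B <= excess A B) /\
  (forall r, (forall a, A a -> dist_to a B <= r) -> excess A B <= r).
Proof.
  intros [a0 Ha0] HB. unfold excess.
  destruct (Lub_Rbar_real (fun r => exists a, A a /\ r = dist_to a B) (1/2) (dist_to a0 B))
    as [H1 H2].
  - exists a0; auto.
  - intros r [a [_ ->]]. apply (dist_to_spec a B HB).
  - split.
    + intros a Ha. apply H1. exists a; auto.
    + intros r Hr. apply H2. intros y [a [Ha ->]]. auto.
Qed.

Lemma hausdorff_excess (A B : S1 -> Prop) : hausdorff A B = Rmax (excess A B) (excess B A).
Proof. reflexivity. Qed.

Lemma hausdorff_sym A B : hausdorff A B = hausdorff B A.
Proof. rewrite !hausdorff_excess. apply Rmax_comm. Qed.

Lemma hausdorff_lt_l (A B : S1 -> Prop) r : nonempty A -> nonempty B -> hausdorff A B < r ->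
  forall a, A a -> exists b, B b /\ dS a b < r.
Proof.
  intros HA HB Hh a Ha. apply dist_to_lt; auto.
  pose proof (proj1 (excess_spec A B HA HB) a Ha).
  rewrite hausdorff_excess in Hh. pose proof (Rmax_l (excess A B) (excess B A)). lra.
Qed.

Lemma hausdorff_lt_r (A B : S1 -> Prop) r : nonempty A -> nonempty B -> hausdorff A B < r ->
  forall b, B b -> exists a, A a /\ dS a b < r.
Proof.
  intros HA HB Hh b Hb. rewrite hausdorff_sym in Hh.
  destruct (hausdorff_lt_l B A r HB HA Hh b Hb) as [a [Ha Hd]].
  exists a. rewrite dS_sym. auto.
Qed.

Lemma hausdorff_le (A B : S1 -> Prop) r : nonempty A -> nonempty B ->
  (forall a, A a -> exists b, B b /\ dS a b <= r) ->
  (forall b, B b -> exists a, A a /\ dS a b <= r) ->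
  hausdorff A B <= r.
Proof.
  intros HA HB H1 H2. rewrite hausdorff_excess. apply Rmax_lub.
  - apply (proj2 (excess_spec A B HA HB)). intros a Ha. destruct (H1 a Ha) as [b [Hb Hd]].
    eapply Rle_trans; [apply (proj1 (dist_to_spec a B HB)); eauto|]. auto.
  - apply (proj2 (excess_spec B A HB HA)). intros b Hb. destruct (H2 b Hb) as [a [Ha Hd]].
    eapply Rle_trans; [apply (proj1 (dist_to_spec b A HA)); eauto|]. rewrite dS_sym; auto.
Qed.

Lemma hausdorff_lt (A B : S1 -> Prop) r r' : nonempty A -> nonempty B -> r < r' ->
  (forall a, A a -> exists b, B b /\ dS a b <= r) ->
  (forall b, B b -> exists a, A a /\ dS a b <= r) ->
  hausdorff A B < r'.
Proof. intros; eapply Rle_lt_trans; [apply hausdorff_le; eauto|]; auto. Qed.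

Lemma hausdorff_xx_lt (A : S1 -> Prop) r : nonempty A -> 0 < r -> hausdorff A A < r.
Proof.
  intros HA Hr. apply (hausdorff_lt A A 0 r); auto;
    intros a Ha; exists a; rewrite dS_xx; split; auto; lra.
Qed.

Lemma hausdorff_triangle P Q R r1 r2 : nonempty P -> nonempty Q -> nonempty R ->
  hausdorff P Q < r1 -> hausdorff Q R < r2 -> hausdorff P R <= r1 + r2.
Proof.
  intros HP HQ HR H1 H2. apply hausdorff_le; auto.
  - intros p Hp. destruct (hausdorff_lt_l P Q r1 HP HQ H1 p Hp) as [q [Hq Hpq]].
    destruct (hausdorff_lt_l Q R r2 HQ HR H2 q Hq) as [r [Hr Hqr]].
    exists r. split; auto. pose proof (dS_triangle p q r). lra.
  - intros r Hr. destruct (hausdorff_lt_r Q R r2 HQ HR H2 r Hr) as [q [Hq Hqr]].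
    destruct (hausdorff_lt_r P Q r1 HP HQ H1 q Hq) as [p [Hp Hpq]].
    exists p. split; auto. pose proof (dS_triangle p q r). lra.
Qed.

Lemma inv_succ_lt (d : R) : 0 < d -> exists N : nat, forall i, (N <= i)%nat -> / (INR i + 1) < d.
Proof.
  intros Hd. destruct (archimed_cor1 d Hd) as [N [HN HN0]]. exists N. intros i Hi.
  apply le_INR in Hi. apply lt_0_INR in HN0.
  eapply Rlt_trans; [|exact HN]. apply Rinv_lt_contravar; [nra|lra].
Qed.

Lemma S1_cluster (w : nat -> S1) :
  exists z, forall e, 0 < e -> forall N, exists i, (N <= i)%nat /\ dS (w i) z < e.
Proof.
  destruct (Bolzano_Weierstrass (fun i => proj1_sig (w i)) (fun c => 0 <= c <= 1) (compact_P3 0 1))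
    as [l Hl].
  { intros n. pose proof (S1_val_bounds (w n)). lra. }
  exists (proj l). intros e He N.
  destruct (Hl (disc l (mkposreal e He)) N) as [p [Hp Hd]].
  { exists (mkposreal e He). intros y Hy; exact Hy. }
  exists p. split; auto. unfold disc in Hd. simpl in Hd.
  rewrite <- (proj_val (w p)). eapply Rle_lt_trans; [apply dS_proj_le|]. exact Hd.
Qed.

Definition continuousS (h : S1 -> S1) :=
  forall x e, 0 < e -> exists d, 0 < d /\ forall y, dS y x < d -> dS (h y) (h x) < e.

Definition unif_continuousS (h : S1 -> S1) :=
  forall e, 0 < e -> exists d, 0 < d /\ forall x y, dS x y < d -> dS (h x) (h y) < e.

Definition clS (O : S1 -> Prop) (x : S1) := forall e, 0 < e -> exists o, O o /\ dS x o < e.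

Lemma clS_closed O : closedS (clS O).
Proof.
  intros x Hx e He. destruct (Hx (e/2)) as [y [Hy Hxy]]; [lra|].
  destruct (Hy (e/2)) as [o [Ho Hyo]]; [lra|]. exists o; split; auto.
  pose proof (dS_triangle x y o); lra.
Qed.

Lemma clS_incl (O : S1 -> Prop) x : O x -> clS O x.
Proof. intros Hx e He. exists x; rewrite dS_xx; auto. Qed.

Lemma clS_mono (O O' : S1 -> Prop) x : (forall y, O y -> O' y) -> clS O x -> clS O' x.
Proof. intros H Hx e He. destruct (Hx e He) as [o [Ho Hd]]. exists o; auto. Qed.

Lemma clS_image (h : S1 -> S1) (O : S1 -> Prop) w :
  continuousS h -> clS O w -> clS (hyper_map h O) (h w).
Proof.
  intros Hc Hw e He. destruct (Hc w e He) as [d [Hd Hh]].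
  destruct (Hw d Hd) as [o [Ho Hwo]]. exists (h o). split; [exists o; auto|].
  rewrite dS_sym. apply Hh. rewrite dS_sym; auto.
Qed.

(* The converse of [clS_image], by sequential compactness of the circle. *)
Lemma clS_image_inv (h : S1 -> S1) (O : S1 -> Prop) z : continuousS h ->
  (forall e, 0 < e -> exists o, O o /\ dS (h o) z < e) -> exists w, clS O w /\ h w = z.
Proof.
  intros Hc Hz.
  destruct (choice (fun i o => O o /\ dS (h o) z < / (INR i + 1))) as [s Hs].
  { intros i. apply Hz, RinvN_pos. }
  destruct (S1_cluster s) as [w Hw]. exists w. split.
  - intros e He. destruct (Hw e He 0%nat) as [i [_ Hi]].
    exists (s i). split; [apply Hs|]. rewrite dS_sym; auto.
  - apply dS_small_eq. intros e He.
    destruct (Hc w (e/2)) as [d [Hd Hh]]; [lra|].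
    destruct (inv_succ_lt (e/2)) as [N HN]; [lra|].
    destruct (Hw d Hd N) as [i [Hi Hdi]].
    specialize (Hh _ Hdi). destruct (Hs i) as [_ Hsi]. specialize (HN i Hi).
    pose proof (dS_triangle (h w) (h (s i)) z). rewrite dS_sym in Hh. lra.
Qed.

Lemma continuousS_unif (h : S1 -> S1) : continuousS h -> unif_continuousS h.
Proof.
  intros Hc e He. apply NNPP; intros Hn.
  assert (Hbad : forall i, exists p : S1 * S1,
    dS (fst p) (snd p) < / (INR i + 1) /\ e <= dS (h (fst p)) (h (snd p))).
  { intros i. apply NNPP; intros Hi. apply Hn. exists (/ (INR i + 1)). split; [apply RinvN_pos|].
    intros x y Hxy. apply Rnot_le_lt. intros Hle. apply Hi. exists (x, y); simpl; auto. }
  destruct (choice _ Hbad) as [s Hs].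
  destruct (S1_cluster (fun i => fst (s i))) as [z Hz].
  destruct (Hc z (e/2)) as [d [Hd Hh]]; [lra|].
  destruct (inv_succ_lt (d/2)) as [N HN]; [lra|].
  destruct (Hz (d/2) ltac:(lra) N) as [i [Hi Hdi]]. simpl in Hdi.
  destruct (Hs i) as [Hclose Hfar]. specialize (HN i Hi).
  set (x := fst (s i)) in *. set (y := snd (s i)) in *.
  assert (Hy : dS y z < d) by (pose proof (dS_triangle y x z); rewrite (dS_sym y x) in *; lra).
  pose proof (Hh _ Hy). pose proof (Hh x ltac:(lra)).
  pose proof (dS_triangle (h x) (h z) (h y)). rewrite (dS_sym (h z)) in *. lra.
Qed.

Lemma continuousS_iter (h : S1 -> S1) n : continuousS h -> continuousS (Nat.iter n h).
Proof.
  intros Hh. induction n as [|n IH]; simpl; intros x e He.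
  - exists e; split; auto.
  - destruct (Hh (Nat.iter n h x) e He) as [d1 [Hd1 H1]].
    destruct (IH x d1 Hd1) as [d2 [Hd2 H2]]. exists d2; split; auto.
    intros y Hy. apply H1, H2, Hy.
Qed.

(** * Lifts of circle diffeomorphisms *)

Lemma iter_mul {A} (h : A -> A) m n x : Nat.iter (m * n) h x = Nat.iter m (Nat.iter n h) x.
Proof. induction m as [|m IH]; simpl; auto. rewrite Nat.iter_add, IH; auto. Qed.

Lemma iter_fixed_mul {A} (h : A -> A) n k x : Nat.iter n h x = x -> Nat.iter (k * n) h x = x.
Proof.
  intros H. rewrite iter_mul. apply (Nat.iter_invariant k _ _ (fun y => y = x)); auto.
  intros y ->. exact H.
Qed.

Lemma iter_comm {A} (h : A -> A) m n x : Nat.iter m h (Nat.iter n h x) = Nat.iter n h (Nat.iter m h x).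
Proof. rewrite <- !Nat.iter_add, Nat.add_comm. reflexivity. Qed.

Lemma continuity_pt_eps (F : R -> R) x : continuity_pt F x ->
  forall e, 0 < e -> exists d, 0 < d /\ forall y, Rabs (y - x) < d -> Rabs (F y - F x) < e.
Proof.
  intros H e He. destruct (H e He) as [d [Hd Hy]]. exists d; split; auto.
  intros y Hyx. destruct (Req_dec x y) as [<-|Hne].
  - rewrite Rminus_diag, Rabs_R0; auto.
  - apply (Hy y). split; [split; [exact I| exact Hne]|]. exact Hyx.
Qed.

Lemma continuous_nonzero_sign (g : R -> R) : continuity g -> (forall x, g x <> 0) ->
  (forall x, 0 < g x) \/ (forall x, g x < 0).
Proof.
  intros Hc Hnz.
  assert (Hsame : forall x y, g x * g y > 0).
  { intros x y. destruct (Rle_or_lt (g x * g y) 0) as [Hle|]; auto.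
    destruct (Rle_or_lt x y) as [Hxy|Hxy].
    - destruct (IVT_cor g x y Hc Hxy Hle) as [z [_ Hz]]. now destruct (Hnz z).
    - rewrite Rmult_comm in Hle. destruct (IVT_cor g y x Hc (Rlt_le _ _ Hxy) Hle) as [z [_ Hz]].
      now destruct (Hnz z). }
  destruct (Rlt_or_le 0 (g 0)) as [Hp|Hn].
  - left. intros x. specialize (Hsame 0 x). nra.
  - right. intros x. specialize (Hsame 0 x). pose proof (Hnz 0). nra.
Qed.

Lemma shiftZ_of_shift1 (F : R -> R) (c : R) : (forall x, F (x + 1) = F x + c) ->
  forall k x, F (x + IZR k) = F x + IZR k * c.
Proof.
  intros H.
  assert (Hnat : forall n x, F (x + INR n) = F x + INR n * c).
  { induction n as [|n IH]; intros x; [simpl; rewrite Rplus_0_r; ring|].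
    rewrite S_INR. replace (x + (INR n + 1)) with ((x + INR n) + 1) by ring. rewrite H, IH. ring. }
  intros k x. destruct (Z_le_gt_dec 0 k) as [Hk|Hk].
  - rewrite <- (Z2Nat.id k Hk), <- INR_IZR_INZ. apply Hnat.
  - assert (E : IZR k = - INR (Z.to_nat (- k))).
    { rewrite INR_IZR_INZ, Z2Nat.id by lia. rewrite opp_IZR. ring. }
    rewrite E. pose proof (Hnat (Z.to_nat (- k)) (x - INR (Z.to_nat (- k)))) as H2.
    replace (x - INR (Z.to_nat (- k)) + INR (Z.to_nat (- k))) with x in H2 by ring.
    replace (x + - INR (Z.to_nat (- k))) with (x - INR (Z.to_nat (- k))) by ring. lra.
Qed.

Section Lift.
Variable F : R -> R.
Variable f : S1 -> S1.
Hypothesis HL : C1_diffeo_lift F f.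

Lemma lift_continuous x : continuity_pt F x.
Proof.
  destruct HL as [Hd _]. apply continuity_pt_filterlim.
  exact (ex_derive_continuous (K:=R_AbsRing) (V:=R_NormedModule) F x (Hd x)).
Qed.

Lemma lift_proj x : f (proj x) = proj (F x).
Proof. destruct HL as [_ [_ [_ [_ H]]]]. apply H. Qed.

Lemma iter_lift_ex_derive n x : ex_derive (Nat.iter n F) x.
Proof.
  destruct HL as [Hd _]. revert x. induction n as [|n IH]; intros x; simpl.
  - apply ex_derive_id.
  - apply (ex_derive_comp F (Nat.iter n F) x); auto.
Qed.

Lemma lift_monotone :
  (strict_increasing F /\ forall x, F (x + 1) = F x + 1) \/
  (strict_decreasing F /\ forall x, F (x + 1) = F x - 1).
Proof.
  destruct HL as [Hd [Hdc [Hnz [Hdeg _]]]].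
  assert (Hc : continuity (Derive F)) by (intros x; apply continuity_pt_filterlim, Hdc).
  destruct (continuous_nonzero_sign _ Hc Hnz) as [Hp|Hn].
  - assert (HI : strict_increasing F).
    { intros x y Hxy. apply (incr_function F m_infty p_infty (Derive F)); simpl; auto.
      - intros z _ _. apply Derive_correct, Hd.
      - intros z _ _. apply Hp. }
    left. split; auto. destruct Hdeg as [|Hdeg]; auto.
    specialize (HI 0 1 ltac:(lra)). rewrite <- (Rplus_0_l 1), Hdeg in HI. lra.
  - assert (HD : strict_decreasing F).
    { intros x y Hxy. apply Ropp_lt_cancel.
      apply (incr_function (fun x => - F x) m_infty p_infty (fun x => - Derive F x)); simpl; auto.
      - intros z _ _. apply (is_derive_opp F z (Derive F z)), Derive_correct, Hd.
      - intros z _ _. specialize (Hn z). lra. }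
    right. split; auto. destruct Hdeg as [Hdeg|]; auto.
    specialize (HD 0 1 ltac:(lra)). rewrite <- (Rplus_0_l 1), Hdeg in HD. lra.
Qed.

Lemma lift_inj x y : F x = F y -> x = y.
Proof.
  intros H. destruct lift_monotone as [[HI _]|[HD _]];
    destruct (Rtotal_order x y) as [Hl|[Hl|Hl]]; auto;
    [specialize (HI _ _ Hl)|specialize (HI _ _ Hl)|specialize (HD _ _ Hl)|specialize (HD _ _ Hl)]; lra.
Qed.

Lemma lift_shiftZ : exists c, (c = 1 \/ c = -1) /\ forall k x, F (x + IZR k) = F x + IZR k * c.
Proof.
  destruct lift_monotone as [[_ H]|[_ H]]; [exists 1|exists (-1)]; split; auto;
    apply shiftZ_of_shift1; intros x; rewrite H; ring.
Qed.

Lemma circle_map_inj a b : f a = f b -> a = b.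
Proof.
  intros H. rewrite <- (proj_val a), <- (proj_val b), !lift_proj in *.
  apply proj_eq_iff in H as [k Hk].
  destruct lift_shiftZ as [c [Hc Hs]].
  apply proj_eq_iff. destruct Hc as [->| ->].
  - exists k. apply lift_inj. rewrite Hs. lra.
  - exists (- k)%Z. apply lift_inj. rewrite Hs, opp_IZR. lra.
Qed.

Lemma lift_surj t : exists x, F x = t.
Proof.
  destruct lift_shiftZ as [c [Hc Hs]].
  set (n := up (Rabs (t - F 0))).
  destruct (archimed (Rabs (t - F 0))) as [Ha _]. fold n in Ha.
  pose proof (Hs n 0) as E1. pose proof (Hs (- n)%Z 0) as E2.
  rewrite opp_IZR, Rplus_0_l in *.
  destruct (IVT_gen F (IZR n) (- IZR n) t lift_continuous) as [x [_ Hx]]; [|exists x; auto].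
  rewrite E1, E2. unfold Rabs in Ha; destruct (Rcase_abs (t - F 0)); destruct Hc as [-> | ->];
    unfold Rmin, Rmax; repeat destruct Rle_dec; split; lra.
Qed.

Lemma circle_map_surj y : exists x, f x = y.
Proof.
  destruct (lift_surj (proj1_sig y)) as [x Hx].
  exists (proj x). rewrite lift_proj, Hx. apply proj_val.
Qed.

Lemma circle_map_continuous : continuousS f.
Proof.
  intros x e He. destruct (continuity_pt_eps F (proj1_sig x) (lift_continuous _) e He) as [d [Hd H]].
  exists d; split; auto. intros y Hy.
  destruct (dS_lift x y (proj1_sig x) (proj_val x)) as [q [<- Eq]].
  rewrite <- (proj_val x), !lift_proj. eapply Rle_lt_trans; [apply dS_proj_le|].
  apply H. lra.
Qed.

End Lift.

(** * Trapping intervals of degree-one lifts *)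

Lemma strict_increasing_rev (G : R -> R) x y : strict_increasing G -> G x < G y -> x < y.
Proof.
  intros HI H. destruct (Rtotal_order x y) as [|[->|Hyx]]; [auto|lra|].
  specialize (HI _ _ Hyx). lra.
Qed.

Lemma strict_increasing_le (G : R -> R) x y : strict_increasing G -> x <= y -> G x <= G y.
Proof. intros HI [H| ->]; [left; apply HI, H|right; reflexivity]. Qed.

Lemma strict_increasing_iter (G : R -> R) n : strict_increasing G -> strict_increasing (Nat.iter n G).
Proof. intros HI. induction n as [|n IH]; intros x y Hxy; simpl; auto. Qed.

Lemma deg1_iter (G : R -> R) n : (forall x, G (x + 1) = G x + 1) ->
  forall x, Nat.iter n G (x + 1) = Nat.iter n G x + 1.
Proof. intros Hs. induction n as [|n IH]; intros x; simpl; auto. rewrite IH, Hs. reflexivity. Qed.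

Lemma fixed_point_side (G : R -> R) s l : G s = s -> derivable_pt_lim G s l -> l <> 1 ->
  exists d, 0 < d /\ forall h, h <> 0 -> Rabs h < d -> 0 < (G (s + h) - (s + h)) * h * (l - 1).
Proof.
  intros Hs Hd Hl.
  destruct (Hd (Rabs (l - 1))) as [d Hdd]; [apply Rabs_pos_lt; lra|].
  exists d; split; [apply cond_pos|]. intros h Hh0 Hh.
  specialize (Hdd h Hh0 Hh). rewrite Hs in Hdd.
  set (q := (G (s + h) - s) / h) in *.
  assert (Hq : (q - 1) * (l - 1) > 0).
  { apply Rabs_def2 in Hdd.
    destruct (Rlt_or_le 0 (l - 1)) as [Hpos|Hneg].
    - rewrite Rabs_pos_eq in Hdd by lra. nra.
    - rewrite Rabs_left1 in Hdd by lra. assert (l - 1 < 0) by lra. nra. }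
  replace (G (s + h) - (s + h)) with ((q - 1) * h) by (unfold q; field; auto).
  assert (0 < h * h) by (apply Rsqr_pos_lt; auto). nra.
Qed.

Section DegreeOne.
Variable G : R -> R.
Hypothesis G_incr : strict_increasing G.
Hypothesis G_cont : continuity G.
Hypothesis G_deg1 : forall x, G (x + 1) = G x + 1.
Hypothesis G_fixed : exists z, G z = z.

Lemma fixed_point_above p : exists z, p < z /\ G z = z.
Proof.
  destruct G_fixed as [z0 Hz0]. destruct (archimed (Rabs (p - z0))) as [Ha _].
  exists (z0 + IZR (up (Rabs (p - z0)))). split.
  - pose proof (Rle_abs (p - z0)); lra.
  - rewrite (shiftZ_of_shift1 G 1 G_deg1), Hz0. ring.
Qed.

Lemma fixed_point_below p : exists z, z < p /\ G z = z.
Proof.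
  destruct G_fixed as [z0 Hz0]. destruct (archimed (Rabs (p - z0))) as [Ha _].
  exists (z0 + IZR (- up (Rabs (p - z0)))). split.
  - rewrite opp_IZR. pose proof (Rle_abs (- (p - z0))). rewrite Rabs_Ropp in *. lra.
  - rewrite (shiftZ_of_shift1 G 1 G_deg1), Hz0. ring.
Qed.

Lemma fixed_point_between x y : x <= y -> (G x - x) * (G y - y) <= 0 ->
  exists w, x <= w <= y /\ G w = w.
Proof.
  intros Hxy Hs. destruct (IVT_cor (fun t => G t - t) x y) as [w [Hw Hw0]]; auto.
  - intros t. apply continuity_pt_minus; [apply G_cont|apply continuity_pt_id].
  - exists w. split; auto. lra.
Qed.

Lemma iter_lt_fixed p z n : p < z -> G z = z -> Nat.iter n G p < z.
Proof. intros H Hz. induction n as [|n IH]; simpl; auto. rewrite <- Hz. apply G_incr; auto. Qed.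

Lemma iter_le_of_decr u n : G u < u -> Nat.iter n G u <= u.
Proof.
  intros Hu. induction n as [|n IH]; simpl; [lra|].
  pose proof (strict_increasing_le G _ _ G_incr IH). lra.
Qed.

Lemma orbit_to_fixed p : p < G p -> exists s, G s = s /\ p < s /\
  (forall n, Nat.iter n G p < s) /\ (forall x, p <= x < s -> x < G x) /\
  (forall u, u < s -> exists n, u < Nat.iter n G p).
Proof.
  intros Hp. destruct (fixed_point_above p) as [z [Hpz Hz]].
  set (E := fun y => exists n, y = Nat.iter n G p).
  assert (Hinc : forall n, Nat.iter n G p < Nat.iter (S n) G p).
  { induction n as [|n IH]; simpl in *; auto. }
  destruct (completeness E) as [s [Hub Hlub]].
  { exists z. intros y [n ->]. left; apply iter_lt_fixed; auto. }
  { exists p, 0%nat. reflexivity. }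
  assert (Hlt : forall n, Nat.iter n G p < s).
  { intros n. eapply Rlt_le_trans; [apply (Hinc n)|]. apply Hub. exists (S n); auto. }
  assert (Happ : forall u, u < s -> exists n, u < Nat.iter n G p).
  { intros u Hu. apply NNPP; intros Hn. assert (s <= u); [|lra]. apply Hlub.
    intros y [n ->]. apply Rnot_lt_le. intros Hl. apply Hn. exists n; auto. }
  assert (Hps : p < s) by exact (Rlt_trans _ _ _ (Hinc 0%nat) (Hlt 1%nat)).
  assert (Hfix : G s = s).
  { apply Rle_antisym.
    - apply Rnot_lt_le. intros Hgt.
      destruct (continuity_pt_eps G s (G_cont s) (G s - s)) as [d [Hd Hcd]]; [lra|].
      destruct (Happ (s - d)) as [n Hn]; [lra|]. pose proof (Hlt n).
      assert (Hn' : Rabs (Nat.iter n G p - s) < d) by (rewrite Rabs_left; lra).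
      specialize (Hcd _ Hn'). pose proof (Hlt (S n)). simpl in *.
      apply Rabs_def2 in Hcd. lra.
    - apply Hlub. intros y [[|n] ->]; simpl; left.
      + exact (Rlt_trans _ _ _ Hp (G_incr _ _ Hps)).
      + apply G_incr, Hlt. }
  exists s. repeat split; auto.
  intros x [Hx1 Hx2]. apply Rnot_le_lt. intros Hx.
  destruct (fixed_point_between p x Hx1) as [w [Hw Hw']]; [nra|].
  assert (p < w) by (destruct (Req_dec p w); [subst; lra|lra]).
  assert (s <= w); [|lra]. apply Hlub. intros y [n ->]. left. apply iter_lt_fixed; auto.
Qed.

Lemma fixed_point_left p : p < G p -> exists r, G r = r /\ r < p /\ (forall x, r < x <= p -> x < G x).
Proof.
  intros Hp. destruct (fixed_point_below p) as [z [Hzp Hz]].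
  set (E := fun y => y <= p /\ G y = y).
  destruct (completeness E) as [r [Hub Hlub]].
  { exists p. intros y [Hy _]; auto. }
  { exists z. split; auto; lra. }
  assert (Hrp : r <= p) by (apply Hlub; intros y [Hy _]; auto).
  assert (Hfix : G r = r).
  { apply NNPP; intros Hne. assert (He : 0 < Rabs (G r - r)) by (apply Rabs_pos_lt; lra).
    assert (Hc : continuity_pt (fun y => G y - y) r)
      by (apply continuity_pt_minus; [apply G_cont|apply continuity_pt_id]).
    destruct (continuity_pt_eps _ r Hc _ He) as [d [Hd Hcd]].
    assert (Hy : exists y, E y /\ r - d < y).
    { apply NNPP; intros Hn. assert (r <= r - d); [|lra]. apply Hlub. intros y Hy.
      apply Rnot_lt_le. intros Hl. apply Hn. exists y; auto. }
    destruct Hy as [y [[Hy1 Hy2] Hy3]]. assert (y <= r) by (apply Hub; split; auto).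
    assert (Hyr : Rabs (y - r) < d) by (rewrite Rabs_left1; lra).
    specialize (Hcd _ Hyr). rewrite Hy2, Rminus_diag, Rminus_0_l, Rabs_Ropp in Hcd. lra. }
  assert (r <> p) by (intros ->; lra).
  exists r. repeat split; auto; [lra|].
  intros x [Hx1 Hx2]. apply Rnot_le_lt. intros Hx.
  destruct (fixed_point_between x p Hx2) as [w [Hw Hw']]; [nra|].
  assert (w <= r) by (apply Hub; split; [lra|auto]). lra.
Qed.

Hypothesis G_hyperbolic : forall z, G z = z -> exists l, derivable_pt_lim G z l /\ l <> 1.

Lemma attracting_interval x0 e : 0 < e -> x0 < G x0 -> exists u v s (j : nat),
  u < G u /\ G v < v /\ v - u < e /\ u <= s <= v /\ G s = s /\ u < Nat.iter j G x0 < v.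
Proof.
  intros He Hx0. destruct (orbit_to_fixed x0 Hx0) as [s [Hs [Hxs [Hlt [Hpos Happ]]]]].
  destruct (G_hyperbolic s Hs) as [l [Hl Hl1]].
  destruct (fixed_point_side G s l Hs Hl Hl1) as [d [Hd Hside]].
  assert (Hl_lt : l < 1).
  { destruct (Rlt_or_le l 1) as [|Hge]; auto.
    set (h := - Rmin d (s - x0) / 2).
    assert (0 < Rmin d (s - x0)) by (apply Rmin_glb_lt; lra).
    pose proof (Rmin_l d (s - x0)); pose proof (Rmin_r d (s - x0)).
    specialize (Hside h ltac:(unfold h; lra) ltac:(unfold h; rewrite Rabs_left; lra)).
    specialize (Hpos (s + h) ltac:(unfold h; lra)). assert (h < 0) by (unfold h; lra).
    assert ((G (s + h) - (s + h)) * h < 0) by nra. nra. }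
  set (v := s + Rmin d e / 2).
  assert (0 < Rmin d e) by (apply Rmin_glb_lt; lra).
  pose proof (Rmin_l d e); pose proof (Rmin_r d e).
  assert (Hgv : G v < v).
  { specialize (Hside (Rmin d e / 2) ltac:(lra) ltac:(rewrite Rabs_pos_eq; lra)). fold v in Hside.
    assert (0 < (G v - v) * (l - 1)) by nra. nra. }
  set (u := Rmax x0 (s - e / 3)).
  assert (x0 <= u /\ s - e / 3 <= u /\ u < s) by (unfold u; split; [apply Rmax_l|split; [apply Rmax_r|apply Rmax_lub_lt; lra]]).
  assert (s < v /\ v - s <= e / 2) by (unfold v; lra).
  destruct (Happ u) as [j Hj]; [lra|]. pose proof (Hlt j).
  exists u, v, s, j. repeat split; try lra. apply Hpos. lra.
Qed.

Lemma repelling_interval x0 e : 0 < e -> x0 < G x0 -> exists u v s (j : nat),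
  G u < u /\ v < G v /\ v - u < e /\ u <= s <= v /\ G s = s /\ Nat.iter j G u < x0 < Nat.iter j G v.
Proof.
  intros He Hx0. destruct (fixed_point_left x0 Hx0) as [r [Hr [Hrx Hpos]]].
  destruct (G_hyperbolic r Hr) as [l [Hl Hl1]].
  destruct (fixed_point_side G r l Hr Hl Hl1) as [d [Hd Hside]].
  assert (Hl_gt : 1 < l).
  { destruct (Rlt_or_le 1 l) as [|Hle]; auto.
    set (h := Rmin d (x0 - r) / 2).
    assert (0 < Rmin d (x0 - r)) by (apply Rmin_glb_lt; lra).
    pose proof (Rmin_l d (x0 - r)); pose proof (Rmin_r d (x0 - r)).
    specialize (Hside h ltac:(unfold h; lra) ltac:(unfold h; rewrite Rabs_pos_eq; lra)).
    specialize (Hpos (r + h) ltac:(unfold h; lra)). assert (0 < h) by (unfold h; lra).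
    assert (0 < (G (r + h) - (r + h)) * h) by nra. nra. }
  set (u := r - Rmin d e / 2).
  assert (0 < Rmin d e) by (apply Rmin_glb_lt; lra).
  pose proof (Rmin_l d e); pose proof (Rmin_r d e).
  assert (Hgu : G u < u).
  { specialize (Hside (- (Rmin d e / 2)) ltac:(lra) ltac:(rewrite Rabs_left; lra)).
    replace (r + - (Rmin d e / 2)) with u in Hside by (unfold u; ring).
    assert (0 < (G u - u) * - (Rmin d e / 2)) by nra. nra. }
  set (v := Rmin x0 (r + e / 3)).
  assert (v <= x0 /\ v <= r + e / 3 /\ r < v) by (unfold v; split; [apply Rmin_l|split; [apply Rmin_r|apply Rmin_glb_lt; lra]]).
  assert (Hgv : v < G v) by (apply Hpos; lra).
  destruct (orbit_to_fixed v Hgv) as [s' [Hs' [Hvs' [_ [_ Happ']]]]].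
  assert (Hx0s : x0 < s').
  { apply Rnot_le_lt; intros Hle. specialize (Hpos s' ltac:(lra)). lra. }
  assert (u < r /\ r - u <= e / 2) by (unfold u; lra).
  destruct (Happ' x0 Hx0s) as [j Hj]. pose proof (iter_le_of_decr u j Hgu).
  exists u, v, r, j. repeat split; lra.
Qed.

End DegreeOne.

Lemma iter_mirror (G : R -> R) n x : Nat.iter n (fun y => - G (- y)) x = - Nat.iter n G (- x).
Proof. induction n as [|n IH]; simpl; [ring|]. rewrite IH, Ropp_involutive. reflexivity. Qed.

(* Conjugating by [x |-> -x] reduces the case [G x0 < x0] to [x0 < G x0]. *)
Section Mirror.
Variable G : R -> R.
Hypothesis G_incr : strict_increasing G.
Hypothesis G_cont : continuity G.
Hypothesis G_deg1 : forall x, G (x + 1) = G x + 1.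
Hypothesis G_fixed : exists z, G z = z.
Hypothesis G_hyperbolic : forall z, G z = z -> exists l, derivable_pt_lim G z l /\ l <> 1.

Let Gm := fun y => - G (- y).

Lemma mirror_incr : strict_increasing Gm.
Proof. intros x y H. unfold Gm. apply Ropp_lt_contravar, G_incr. lra. Qed.

Lemma mirror_cont : continuity Gm.
Proof.
  intros x. apply continuity_pt_opp.
  apply (continuity_pt_comp Ropp G); [apply continuity_pt_opp, continuity_pt_id|apply G_cont].
Qed.

Lemma mirror_deg1 x : Gm (x + 1) = Gm x + 1.
Proof. unfold Gm. replace (- x) with (- (x + 1) + 1) by ring. rewrite G_deg1. ring. Qed.

Lemma mirror_fixed : exists z, Gm z = z.
Proof. destruct G_fixed as [z Hz]. exists (- z). unfold Gm. rewrite Ropp_involutive, Hz. reflexivity. Qed.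

Lemma mirror_hyperbolic z : Gm z = z -> exists l, derivable_pt_lim Gm z l /\ l <> 1.
Proof.
  unfold Gm. intros Hz. destruct (G_hyperbolic (- z)) as [l [Hl Hl1]]; [lra|].
  exists l. split; auto.
  apply is_derive_Reals in Hl. apply is_derive_Reals.
  replace l with (- (-1 * l)) at 1 by ring.
  apply (is_derive_opp (fun y => G (- y))).
  apply (is_derive_comp G Ropp z l (-1)); auto. auto_derive; auto.
Qed.

Lemma attracting_interval_nonfixed x0 e : 0 < e -> G x0 <> x0 -> exists u v s (j : nat),
  u < G u /\ G v < v /\ v - u < e /\ u <= s <= v /\ G s = s /\ u < Nat.iter j G x0 < v.
Proof.
  intros He Hne. destruct (Rlt_or_le x0 (G x0)) as [Hgt|Hle].
  - apply attracting_interval; auto.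
  - destruct (attracting_interval Gm mirror_incr mirror_cont mirror_deg1 mirror_fixed
      mirror_hyperbolic (- x0) e He) as [u [v [s [j H]]]].
    { unfold Gm. rewrite Ropp_involutive. destruct Hle; [lra|congruence]. }
    unfold Gm in H. rewrite iter_mirror, Ropp_involutive in H.
    exists (- v), (- u), (- s), j. lra.
Qed.

Lemma repelling_interval_nonfixed x0 e : 0 < e -> G x0 <> x0 -> exists u v s (j : nat),
  G u < u /\ v < G v /\ v - u < e /\ u <= s <= v /\ G s = s /\ Nat.iter j G u < x0 < Nat.iter j G v.
Proof.
  intros He Hne. destruct (Rlt_or_le x0 (G x0)) as [Hgt|Hle].
  - apply repelling_interval; auto.
  - destruct (repelling_interval Gm mirror_incr mirror_cont mirror_deg1 mirror_fixed
      mirror_hyperbolic (- x0) e He) as [u [v [s [j H]]]].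
    { unfold Gm. rewrite Ropp_involutive. destruct Hle; [lra|congruence]. }
    unfold Gm in H. rewrite !iter_mirror in H.
    exists (- v), (- u), (- s), j. lra.
Qed.

End Mirror.

(** * Trapping arcs of Morse-Smale circle diffeomorphisms *)

Definition per (f : S1 -> S1) x := periodic_pt whole_circle f x.
Definition nw (f : S1 -> S1) x := nonwandering whole_circle dS f x.

(* The margin [eta] is what makes a trap absorb pseudo-orbits as well as orbits. *)
Definition fwd_trapping (g : S1 -> S1) (a : S1) (e : R) := exists (T : S1 -> Prop) eta (j : nat) c,
  0 < eta /\ g c = c /\ T c /\ (forall y z, T y -> T z -> dS y z < e) /\
  (forall t y, T t -> dS y (g t) < eta -> T y) /\ (forall y, dS y (Nat.iter j g a) < eta -> T y).

Definition bwd_trapping (g : S1 -> S1) (a : S1) (e : R) := exists (T : S1 -> Prop) eta (j : nat) c,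
  0 < eta /\ g c = c /\ T c /\ (forall y z, T y -> T z -> dS y z < e) /\
  (forall t y, T t -> dS (g y) t < eta -> T y) /\ (forall y, dS (Nat.iter j g y) a < eta -> T y).

Definition proj_interval (u v : R) (y : S1) := exists t, u <= t <= v /\ proj t = y.

Lemma proj_interval_diam u v e y z : v - u < e ->
  proj_interval u v y -> proj_interval u v z -> dS y z < e.
Proof.
  intros Huv [t1 [Ht1 <-]] [t2 [Ht2 <-]]. eapply Rle_lt_trans; [apply dS_proj_le|].
  unfold Rabs; destruct Rcase_abs; lra.
Qed.

Section CircleTraps.
Variable g : S1 -> S1.
Variable G : R -> R.
Hypothesis G_lift : forall x, g (proj x) = proj (G x).
Hypothesis G_incr : strict_increasing G.
Hypothesis G_deg1 : forall x, G (x + 1) = G x + 1.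

Lemma iter_lift j x : Nat.iter j g (proj x) = proj (Nat.iter j G x).
Proof. symmetry. apply Nat.iter_swap_gen. intros y. symmetry. apply G_lift. Qed.

Lemma iter_lift_dS j y t :
  exists y1, proj y1 = y /\ Rabs (Nat.iter j G y1 - t) = dS (Nat.iter j g y) (proj t).
Proof.
  rewrite <- (proj_val y), iter_lift.
  destruct (dS_proj_attained (Nat.iter j G (proj1_sig y)) t) as [k Hk].
  exists (proj1_sig y - IZR k). rewrite proj_subZ. split; [reflexivity|].
  rewrite <- Hk. f_equal.
  pose proof (shiftZ_of_shift1 (Nat.iter j G) 1 (deg1_iter G j G_deg1) (- k) (proj1_sig y)) as E.
  rewrite opp_IZR in E. unfold Rminus. rewrite E. ring.
Qed.

Lemma fwd_trapping_of_interval x0 u v s (j : nat) e : u < G u -> G v < v -> v - u < e ->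
  u <= s <= v -> G s = s -> u < Nat.iter j G x0 < v -> fwd_trapping g (proj x0) e.
Proof.
  intros Hu Hv Hdiam Hs Hfix Hj.
  set (xj := Nat.iter j G x0) in *.
  set (eta := Rmin (Rmin (G u - u) (v - G v)) (Rmin (xj - u) (v - xj))).
  assert (eta <= G u - u /\ eta <= v - G v /\ eta <= xj - u /\ eta <= v - xj /\ 0 < eta)
    as [He1 [He2 [He3 [He4 He0]]]].
  { unfold eta. repeat split; try (repeat apply Rmin_glb_lt; lra);
      eauto using Rle_trans, Rmin_l, Rmin_r. }
  exists (proj_interval u v), eta, j, (proj s). repeat split; auto.
  - rewrite G_lift, Hfix. reflexivity.
  - exists s; auto.
  - intros y z. apply proj_interval_diam; auto.
  - intros t y [t' [Ht' <-]] Hy. rewrite G_lift in Hy.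
    destruct (dS_lift (proj (G t')) y (G t') eq_refl) as [q [Hq Eq]].
    exists q. split; auto. rewrite <- Eq in Hy. apply Rabs_def2 in Hy.
    pose proof (strict_increasing_le G _ _ G_incr (proj1 Ht')).
    pose proof (strict_increasing_le G _ _ G_incr (proj2 Ht')). lra.
  - intros y Hy. rewrite iter_lift in Hy. fold xj in Hy.
    destruct (dS_lift (proj xj) y xj eq_refl) as [q [Hq Eq]].
    exists q. split; auto. rewrite <- Eq in Hy. apply Rabs_def2 in Hy. lra.
Qed.

Lemma bwd_trapping_of_interval x0 u v s (j : nat) e : G u < u -> v < G v -> v - u < e ->
  u <= s <= v -> G s = s -> Nat.iter j G u < x0 < Nat.iter j G v -> bwd_trapping g (proj x0) e.
Proof.
  intros Hu Hv Hdiam Hs Hfix Hj.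
  set (eta := Rmin (Rmin (u - G u) (G v - v)) (Rmin (x0 - Nat.iter j G u) (Nat.iter j G v - x0))).
  assert (eta <= u - G u /\ eta <= G v - v /\ eta <= x0 - Nat.iter j G u /\
          eta <= Nat.iter j G v - x0 /\ 0 < eta) as [He1 [He2 [He3 [He4 He0]]]].
  { unfold eta. repeat split; try (repeat apply Rmin_glb_lt; lra);
      eauto using Rle_trans, Rmin_l, Rmin_r. }
  exists (proj_interval u v), eta, j, (proj s). repeat split; auto.
  - rewrite G_lift, Hfix. reflexivity.
  - exists s; auto.
  - intros y z. apply proj_interval_diam; auto.
  - intros t y [t' [Ht' <-]] Hy.
    destruct (iter_lift_dS 1 y t') as [y1 [<- Hy1]]. simpl in Hy1. rewrite <- Hy1 in Hy.
    exists y1. split; auto. apply Rabs_def2 in Hy.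
    split; left; apply (strict_increasing_rev G); auto; lra.
  - intros y Hy.
    destruct (iter_lift_dS j y x0) as [y1 [<- Hy1]]. rewrite <- Hy1 in Hy.
    exists y1. split; auto. apply Rabs_def2 in Hy.
    split; left; apply (strict_increasing_rev (Nat.iter j G)); auto using strict_increasing_iter; lra.
Qed.

End CircleTraps.

Lemma lift_iter_even F f m : C1_diffeo_lift F f ->
  strict_increasing (Nat.iter (2 * m) F) /\
  forall x, Nat.iter (2 * m) F (x + 1) = Nat.iter (2 * m) F x + 1.
Proof.
  intros HL. replace (2 * m)%nat with (m * 2)%nat by lia.
  assert (HFF : strict_increasing (Nat.iter 2 F) /\ forall x, Nat.iter 2 F (x + 1) = Nat.iter 2 F x + 1).
  { simpl. destruct (lift_monotone F f HL) as [[HI Hs]|[HD Hs]]; split.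
    - intros x y H. apply HI, HI, H.
    - intros x. rewrite Hs, Hs. reflexivity.
    - intros x y H. apply HD, HD, H.
    - intros x. rewrite Hs. replace (F x) with (F x - 1 + 1) at 2 by ring. rewrite Hs. ring. }
  destruct HFF as [HI Hs]. split.
  - intros x y H. rewrite !iter_mul. apply strict_increasing_iter; auto.
  - intros x. rewrite !iter_mul. apply deg1_iter; auto.
Qed.

Section MorseSmale.
Variable f : S1 -> S1.
Variable F : R -> R.
Hypothesis HL : C1_diffeo_lift F f.
Hypothesis f_hyperbolic : forall p, per f p -> hyperbolic_pt F f p.
Variable M : nat.
Hypothesis M_pos : (0 < M)%nat.
Hypothesis M_period : forall c, per f c -> Nat.iter M f c = c.
Variable c0 : S1.
Hypothesis c0_per : per f c0.

(* An even iterate, so that its lift is increasing. *)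
Let N := (2 * M)%nat.

Lemma per_iff_fixed c : per f c <-> Nat.iter N f c = c.
Proof.
  split.
  - intros Hc. apply iter_fixed_mul, M_period, Hc.
  - intros Hc. split; [exact I|]. exists N. split; auto. unfold N. lia.
Qed.

(* The lift of [f^N] shifted by an integer so that it fixes a lift of [c0]. *)
Lemma even_iter_lift : exists G, (forall x, Nat.iter N f (proj x) = proj (G x)) /\
  strict_increasing G /\ continuity G /\ (forall x, G (x + 1) = G x + 1) /\ (exists z, G z = z) /\
  (forall z, G z = z -> exists l, derivable_pt_lim G z l /\ l <> 1).
Proof.
  set (G0 := Nat.iter N F).
  assert (HG0 : forall x, Nat.iter N f (proj x) = proj (G0 x)) by apply (iter_lift f F (lift_proj F f HL)).
  destruct (lift_iter_even F f M HL) as [HI Hs]. fold N G0 in HI, Hs.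
  assert (Hc : proj (G0 (proj1_sig c0)) = proj (proj1_sig c0))
    by (rewrite <- HG0, proj_val; apply per_iff_fixed, c0_per).
  destruct (proj1 (proj_eq_iff _ _) Hc) as [k Hk].
  exists (fun x => G0 x - IZR k). repeat split.
  - intros x. rewrite proj_subZ. apply HG0.
  - intros x y H. specialize (HI x y H). lra.
  - intros x. apply continuity_pt_minus; [|apply continuity_pt_const; intros ? ?; reflexivity].
    apply continuity_pt_filterlim.
    exact (ex_derive_continuous (K:=R_AbsRing) (V:=R_NormedModule) G0 x (iter_lift_ex_derive F f HL N x)).
  - intros x. rewrite Hs. ring.
  - exists (proj1_sig c0). rewrite Hk. ring.
  - intros z Hz. exists (Derive G0 z). split.
    + replace (Derive G0 z) with (Derive G0 z - 0) by ring.
      apply derivable_pt_lim_minus; [|apply derivable_pt_lim_const].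
      apply is_derive_Reals, Derive_correct, (iter_lift_ex_derive F f HL).
    + assert (Hfix : Nat.iter N f (proj z) = proj z)
        by (rewrite HG0, <- (proj_subZ (G0 z) k), Hz; reflexivity).
      intros Hd. apply (f_hyperbolic (proj z) (proj2 (per_iff_fixed _) Hfix) N z); auto.
      * unfold N. lia.
      * fold G0. rewrite Hd. apply Rabs_R1.
Qed.

Lemma ms_trapping a e : 0 < e -> ~ per f a ->
  fwd_trapping (Nat.iter N f) a e /\ bwd_trapping (Nat.iter N f) a e.
Proof.
  intros He Hna.
  destruct even_iter_lift as [G [Hlift [HI [Hc [Hs [Hz Hh]]]]]].
  assert (Hne : G (proj1_sig a) <> proj1_sig a).
  { intros Hfix. apply Hna, per_iff_fixed. rewrite <- (proj_val a), Hlift, Hfix. reflexivity. }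
  rewrite <- (proj_val a). split.
  - destruct (attracting_interval_nonfixed G HI Hc Hs Hz Hh _ e He Hne) as [u [v [s [j H]]]].
    eapply fwd_trapping_of_interval; eauto; apply H.
  - destruct (repelling_interval_nonfixed G HI Hc Hs Hz Hh _ e He Hne) as [u [v [s [j H]]]].
    eapply bwd_trapping_of_interval; eauto; apply H.
Qed.

End MorseSmale.

Lemma per_nw f x : per f x -> nw f x.
Proof.
  intros [_ [n [Hn Hx]]]. split; [exact I|]. intros e He.
  exists n, x. rewrite Hx, dS_xx. repeat split; auto.
Qed.

Lemma nw_exists f : continuousS f -> exists z, nw f z.
Proof.
  intros Hc. destruct (S1_cluster (fun i => Nat.iter i f (proj 0))) as [z Hz].
  exists z. split; [exact I|]. intros e He.
  destruct (Hz e He 0%nat) as [i [_ Hi]]. destruct (Hz e He (S i)) as [i' [Hi' Hi'2]].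
  exists (i' - i)%nat, (Nat.iter i f (proj 0)). repeat split; auto; [lia|].
  rewrite <- Nat.iter_add. replace (i' - i + i)%nat with i' by lia. auto.
Qed.

Lemma common_period f (l : list S1) :
  exists M, (0 < M)%nat /\ forall c, In c l -> per f c -> Nat.iter M f c = c.
Proof.
  induction l as [|a l IH].
  - exists 1%nat. split; [lia|]. intros c [].
  - destruct IH as [M [HM H]]. destruct (classic (per f a)) as [[_ [n [Hn Ha]]]|Hna].
    + exists (n * M)%nat. split; [lia|]. intros c [<-|Hc] Hp.
      * rewrite Nat.mul_comm. apply iter_fixed_mul; auto.
      * apply iter_fixed_mul, H; auto.
    + exists M. split; auto. intros c [<-|Hc] Hp; [contradiction|]. apply H; auto.
Qed.

Record ms_circle_map (f : S1 -> S1) : Prop := {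
  ms_cont : continuousS f;
  ms_inj : forall a b, f a = f b -> a = b;
  ms_surj : forall y, exists x, f x = y;
  ms_per_finite : exists l, forall x, per f x -> In x l;
  ms_nw_per : forall x, nw f x -> per f x;
  ms_traps : exists N, (0 < N)%nat /\ forall a e, 0 < e -> ~ per f a ->
     fwd_trapping (Nat.iter N f) a e /\ bwd_trapping (Nat.iter N f) a e
}.

Lemma MorseSmale_ms_circle_map f : MorseSmale f -> ms_circle_map f.
Proof.
  intros [F [HL [[l Hl] [Hnw [Hhyp _]]]]].
  pose proof (circle_map_continuous F f HL) as Hc.
  assert (Hfin : forall x, per f x -> In x l) by (intros x Hx; apply Hl, per_nw, Hx).
  constructor; auto.
  - apply (circle_map_inj F f HL).
  - apply (circle_map_surj F f HL).
  - exists l; auto.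
  - destruct (common_period f l) as [M [HM HMl]].
    destruct (nw_exists f Hc) as [c0 Hc0].
    exists (2 * M)%nat. split; [lia|].
    apply (ms_trapping f F HL Hhyp M HM (fun c Hp => HMl c (Hfin c Hp) Hp) c0 (Hnw c0 Hc0)).
Qed.

(** * The induced map on the hyperspace *)

Lemma pred_ext (A B : S1 -> Prop) : (forall x, A x <-> B x) -> A = B.
Proof. intros H. apply functional_extensionality. intros x. apply propositional_extensionality, H. Qed.

Lemma iter_hyper_map f n A : Nat.iter n (hyper_map f) A = hyper_map (Nat.iter n f) A.
Proof.
  induction n as [|n IH]; simpl.
  - apply pred_ext. intros y. split; [intros H; exists y; auto|intros [x [Hx <-]]; auto].
  - rewrite IH. apply pred_ext. intros y. split.
    + intros [x [[z [Hz <-]] <-]]. exists z; auto.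
    + intros [x [Hx <-]]. exists (Nat.iter n f x). split; auto. exists x; auto.
Qed.

Lemma iter_surj (h : S1 -> S1) n : (forall y, exists x, h x = y) -> forall y, exists x, Nat.iter n h x = y.
Proof.
  intros Hs. induction n as [|n IH]; intros y; [exists y; reflexivity|].
  destruct (Hs y) as [z <-]. destruct (IH z) as [x <-]. exists x. reflexivity.
Qed.

Lemma iter_inj (h : S1 -> S1) n : (forall a b, h a = h b -> a = b) ->
  forall a b, Nat.iter n h a = Nat.iter n h b -> a = b.
Proof. intros Hi. induction n as [|n IH]; intros a b H; simpl in *; auto. Qed.

Lemma closedS_finite (P : S1 -> Prop) (l : list S1) : (forall x, P x -> In x l) -> closedS P.
Proof.
  revert P. induction l as [|a l IH]; intros P HP x Hx.
  - destruct (Hx 1 ltac:(lra)) as [y [Hy _]]. destruct (HP y Hy).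
  - destruct (classic (forall e, 0 < e -> exists y, (P y /\ y <> a) /\ dS x y < e)) as [H|H].
    + apply (IH (fun y => P y /\ y <> a)); auto.
      intros y [Hy Hne]. destruct (HP y Hy) as [<-|]; [congruence|auto].
    + apply not_all_ex_not in H as [e0 H]. apply imply_to_and in H as [He0 H].
      assert (Hxa : x = a).
      { apply dS_small_eq. intros e He.
        destruct (Hx (Rmin e e0)) as [y [Hy Hxy]]; [apply Rmin_glb_lt; lra|].
        destruct (classic (y = a)) as [->|Hne]; [pose proof (Rmin_l e e0); lra|].
        exfalso. apply H. exists y. split; auto. pose proof (Rmin_r e e0); lra. }
      subst x. destruct (Hx e0 He0) as [y [Hy Hd]].
      apply NNPP; intros Hna. apply H. exists y. split; auto.
      split; auto. intros ->. contradiction.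
Qed.

Lemma hyper_finite (P : S1 -> Prop) (l : list S1) x :
  (forall y, P y -> In y l) -> P x -> hyper P.
Proof. intros Hl Hx. split; [apply (closedS_finite P l Hl)|exists x; auto]. Qed.

Lemma hyper_nonempty A : hyper A -> nonempty A.
Proof. intros [_ H]; exact H. Qed.

Lemma hyper_clS (O : S1 -> Prop) x : O x -> hyper (clS O).
Proof. intros Hx. split; [apply clS_closed|exists x; apply clS_incl, Hx]. Qed.

Lemma hyper_hyper_map (h : S1 -> S1) P : continuousS h -> hyper P -> hyper (hyper_map h P).
Proof.
  intros Hc [HP [x Hx]]. split; [|exists (h x), x; auto].
  intros z Hz. destruct (clS_image_inv h P z Hc) as [w [Hw Hwz]].
  - intros e He. destruct (Hz e He) as [y [[o [Ho <-]] Hd]].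
    exists o. split; auto. rewrite dS_sym; auto.
  - exists w. split; auto.
Qed.

Lemma hyper_iter (h : S1 -> S1) n P : continuousS h -> hyper P -> hyper (Nat.iter n (hyper_map h) P).
Proof. intros Hc HP. induction n as [|n IH]; simpl; auto. apply hyper_hyper_map; auto. Qed.

Lemma hausdorff_hyper_map_cont (h : S1 -> S1) : unif_continuousS h ->
  forall e, 0 < e -> exists d, 0 < d /\ forall P Q, nonempty P -> nonempty Q ->
  hausdorff P Q < d -> hausdorff (hyper_map h P) (hyper_map h Q) < e.
Proof.
  intros Hu e He. destruct (Hu (e/2) ltac:(lra)) as [d [Hd Hh]]. exists d. split; auto.
  intros P Q HP HQ HPQ. pose proof HP as [p0 Hp0]. pose proof HQ as [q0 Hq0].
  apply (hausdorff_lt _ _ (e/2)); [exists (h p0), p0; auto|exists (h q0), q0; auto|lra| |].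
  - intros y [p [Hp <-]]. destruct (hausdorff_lt_l P Q d HP HQ HPQ p Hp) as [q [Hq Hpq]].
    exists (h q). split; [exists q; auto|]. left. apply Hh; auto.
  - intros y [q [Hq <-]]. destruct (hausdorff_lt_r P Q d HP HQ HPQ q Hq) as [p [Hp Hpq]].
    exists (h p). split; [exists p; auto|]. left. apply Hh; auto.
Qed.

Lemma hyper_map_clS (h : S1 -> S1) (O : S1 -> Prop) : continuousS h ->
  (forall o, O o -> O (h o)) -> (forall o, O o -> exists p, O p /\ h p = o) ->
  hyper_map h (clS O) = clS O.
Proof.
  intros Hc Hfwd Hbwd. apply pred_ext. intros y. split.
  - intros [x [Hx <-]]. apply (clS_mono (hyper_map h O)).
    + intros z [o [Ho <-]]. apply Hfwd; auto.
    + apply clS_image; auto.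
  - intros Hy. destruct (clS_image_inv h O y Hc) as [w [Hw Hwy]].
    + intros e He. destruct (Hy e He) as [o [Ho Hd]]. destruct (Hbwd o Ho) as [p [Hp <-]].
      exists p. split; auto. rewrite dS_sym; auto.
    + exists w; auto.
Qed.

Definition pseudo_orbit (f : S1 -> S1) (d : R) (k : nat) (x y : S1) :=
  exists c : nat -> S1, c 0%nat = x /\ c k = y /\ forall i, (i < k)%nat -> dS (f (c i)) (c (S i)) < d.

Section PseudoOrbit.
Variable f : S1 -> S1.

Lemma pseudo_orbit_refl d x : pseudo_orbit f d 0 x x.
Proof. exists (fun _ => x). repeat split; auto. intros i Hi; lia. Qed.

Lemma pseudo_orbit_cons d k x y z : dS (f x) y < d -> pseudo_orbit f d k y z -> pseudo_orbit f d (S k) x z.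
Proof.
  intros H [c [H0 [Hk Hi]]]. exists (fun i => match i with 0%nat => x | S i' => c i' end).
  repeat split; auto. intros [|i] Hl; [rewrite H0; auto|]. apply Hi. lia.
Qed.

Lemma pseudo_orbit_uncons d k x z : pseudo_orbit f d (S k) x z ->
  exists y, dS (f x) y < d /\ pseudo_orbit f d k y z.
Proof.
  intros [c [H0 [Hk Hi]]]. exists (c 1%nat). split.
  - rewrite <- H0. apply Hi. lia.
  - exists (fun i => c (S i)). repeat split; auto. intros i Hl. apply Hi. lia.
Qed.

Lemma pseudo_orbit_app d k1 k2 x y z :
  pseudo_orbit f d k1 x y -> pseudo_orbit f d k2 y z -> pseudo_orbit f d (k1 + k2) x z.
Proof.
  revert x. induction k1 as [|k1 IH]; intros x H1 H2.
  - destruct H1 as [c [H0 [Hk _]]]. simpl. rewrite <- H0, Hk. auto.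
  - apply pseudo_orbit_uncons in H1 as [x1 [Hx1 H1]]. apply (pseudo_orbit_cons _ _ _ x1); auto.
Qed.

Lemma pseudo_orbit_split d k1 k2 x z : pseudo_orbit f d (k1 + k2) x z ->
  exists y, pseudo_orbit f d k1 x y /\ pseudo_orbit f d k2 y z.
Proof.
  revert x. induction k1 as [|k1 IH]; intros x H.
  - exists x. split; auto. apply pseudo_orbit_refl.
  - apply pseudo_orbit_uncons in H as [x1 [Hx1 H]]. destruct (IH x1 H) as [y [Hy1 Hy2]].
    exists y. split; auto. apply (pseudo_orbit_cons _ _ _ x1); auto.
Qed.

Lemma pseudo_orbit_snoc d k x y z : pseudo_orbit f d k x y -> dS (f y) z < d -> pseudo_orbit f d (S k) x z.
Proof.
  intros H1 H2. rewrite <- Nat.add_1_r. apply (pseudo_orbit_app _ _ _ _ y); auto.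
  apply (pseudo_orbit_cons _ _ _ z); auto. apply pseudo_orbit_refl.
Qed.

Lemma pseudo_orbit_orbit d k x : 0 < d -> pseudo_orbit f d k x (Nat.iter k f x).
Proof. intros Hd. exists (fun i => Nat.iter i f x). repeat split; auto. intros i _. simpl. rewrite dS_xx. auto. Qed.

Lemma pseudo_orbit_mono d d' k x y : d <= d' -> pseudo_orbit f d k x y -> pseudo_orbit f d' k x y.
Proof. intros Hdd [c [H0 [H1 Hi]]]. exists c. repeat split; auto. intros i Hl. specialize (Hi i Hl). lra. Qed.

Lemma pseudo_orbit_shadow : unif_continuousS f -> forall k eta, 0 < eta ->
  exists d, 0 < d /\ forall x y, pseudo_orbit f d k x y -> dS (Nat.iter k f x) y < eta.
Proof.
  intros Hu k. induction k as [|k IH]; intros eta He.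
  - exists 1. split; [lra|]. intros x y [c [<- [<- _]]]. simpl. rewrite dS_xx. auto.
  - destruct (Hu (eta/2) ltac:(lra)) as [d1 [Hd1 Hf]].
    destruct (IH d1 Hd1) as [d2 [Hd2 H2]].
    exists (Rmin d2 (eta/2)). split; [apply Rmin_glb_lt; lra|].
    intros x z H. rewrite <- Nat.add_1_r in H. apply pseudo_orbit_split in H as [y [Hxy Hyz]].
    apply (pseudo_orbit_mono _ d2) in Hxy; [|apply Rmin_l].
    destruct Hyz as [c [H0 [H1 Hc]]]. specialize (Hc 0%nat ltac:(lia)). rewrite H0, H1 in Hc.
    specialize (Hf _ _ (H2 _ _ Hxy)). pose proof (Rmin_r d2 (eta/2)).
    simpl. pose proof (dS_triangle (f (Nat.iter k f x)) (f y) z). lra.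
Qed.

End PseudoOrbit.

(** * Uncountably many periodic points and non-transitivity *)

Definition third_avoiding (p : R * R) (y : R) : R * R :=
  let (l, r) := p in
  if Rle_dec y (l + (r - l) / 3) then (r - (r - l) / 3, r) else (l, l + (r - l) / 3).

Fixpoint nested_thirds (u : nat -> R) (lo hi : R) (n : nat) : R * R :=
  match n with 0%nat => (lo, hi) | S n => third_avoiding (nested_thirds u lo hi n) (u n) end.

Lemma nested_thirds_step (u : nat -> R) lo hi : lo < hi -> forall n,
  let (l, r) := nested_thirds u lo hi n in let (l', r') := nested_thirds u lo hi (S n) in
  l < r /\ l <= l' /\ r' <= r /\ ~ (l' <= u n <= r').
Proof.
  intros Hlh n. simpl.
  assert (Hlt : forall m, fst (nested_thirds u lo hi m) < snd (nested_thirds u lo hi m)).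
  { induction m as [|m IH]; simpl; auto. destruct (nested_thirds u lo hi m) as [l r]. simpl in *.
    destruct Rle_dec; simpl; lra. }
  specialize (Hlt n). destruct (nested_thirds u lo hi n) as [l r]. simpl in *.
  destruct Rle_dec; lra.
Qed.

(* Cantor's nested-interval argument. *)
Lemma interval_not_countable a b (h : R -> nat) : a < b ->
  ~ (forall s t, a < s < b -> a < t < b -> h s = h t -> s = t).
Proof.
  intros Hab Hinj.
  set (u := fun n : nat => match excluded_middle_informative (exists t, a < t < b /\ h t = n) with
                           | left H => proj1_sig (constructive_indefinite_description _ H)
                           | right _ => a end).
  assert (Hu : forall t, a < t < b -> u (h t) = t).
  { intros t Ht. unfold u. destruct excluded_middle_informative as [H|H].
    - destruct (constructive_indefinite_description _ H) as [t' [Ht' Ht'']]. simpl. apply Hinj; auto.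
    - exfalso. apply H. exists t; auto. }
  set (lo := a + (b - a) / 4). set (hi := b - (b - a) / 4).
  set (I := nested_thirds u lo hi).
  assert (HP : forall n, fst (I n) < snd (I n) /\ fst (I n) <= fst (I (S n)) /\
                         snd (I (S n)) <= snd (I n) /\ ~ (fst (I (S n)) <= u n <= snd (I (S n)))).
  { intros n. pose proof (nested_thirds_step u lo hi ltac:(unfold lo, hi; lra) n) as H.
    unfold I. destruct (nested_thirds u lo hi n), (nested_thirds u lo hi (S n)). exact H. }
  assert (Hmono : forall n d : nat, fst (I n) <= fst (I (n + d)%nat) /\ snd (I (n + d)%nat) <= snd (I n)).
  { intros n d. induction d as [|d IH]; [rewrite Nat.add_0_r; lra|].
    rewrite Nat.add_succ_r. destruct (HP (n + d)%nat) as [_ [H2 [H3 _]]]. lra. }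
  assert (Hlr : forall m n, fst (I m) <= snd (I n)).
  { intros m n. destruct (Nat.le_ge_cases m n) as [H|H].
    - destruct (Hmono m (n - m)%nat) as [H1 _]. replace (m + (n - m))%nat with n in H1 by lia.
      destruct (HP n). lra.
    - destruct (Hmono n (m - n)%nat) as [_ H1]. replace (n + (m - n))%nat with m in H1 by lia.
      destruct (HP m). lra. }
  destruct (completeness (fun y => exists n, y = fst (I n))) as [x [Hub Hlub]].
  { exists hi. intros y [n ->]. apply (Hlr n 0%nat). }
  { exists lo, 0%nat. reflexivity. }
  assert (Hx1 : forall n, fst (I n) <= x) by (intros n; apply Hub; exists n; auto).
  assert (Hx2 : forall n, x <= snd (I n)) by (intros n; apply Hlub; intros y [m ->]; apply Hlr).
  assert (Hx : a < x < b) by (pose proof (Hx1 0%nat); pose proof (Hx2 0%nat); simpl in *; unfold lo, hi in *; lra).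
  destruct (HP (h x)) as [_ [_ [_ Havoid]]]. apply Havoid. rewrite (Hu x Hx). auto.
Qed.

Lemma S1_not_finite (l : list S1) : exists x, ~ In x l.
Proof.
  set (m := fold_right Rmax 0 (map (fun x => proj1_sig x) l)).
  assert (Hm : 0 <= m < 1 /\ forall x, In x l -> proj1_sig x <= m).
  { unfold m. induction l as [|a l IH]; simpl.
    - split; [lra|]. intros x [].
    - destruct IH as [[H1 H2] H3]. pose proof (S1_val_bounds a).
      split; [split|].
      + eapply Rle_trans; [|apply Rmax_r]. auto.
      + apply Rmax_lub_lt; lra.
      + intros x [<-|Hx]; [apply Rmax_l|]. eapply Rle_trans; [apply H3; auto|apply Rmax_r]. }
  destruct Hm as [[Hm1 Hm2] Hm3].
  exists (proj ((m + 1) / 2)). intros Hin. apply Hm3 in Hin. simpl in Hin.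
  rewrite frac_part_id in Hin; lra.
Qed.

Lemma wandering_ball f : ms_circle_map f -> exists w r, 0 < r /\ ~ per f w /\
  forall n y, (0 < n)%nat -> dS y w < r -> r <= dS (Nat.iter n f y) w.
Proof.
  intros HS. destruct (ms_per_finite f HS) as [l Hl]. destruct (S1_not_finite l) as [w Hw].
  assert (Hnp : ~ per f w) by (intros H; apply Hw, Hl, H).
  assert (Hnw : ~ nw f w) by (intros H; apply Hnp, (ms_nw_per f HS), H).
  assert (H : ~ forall e, 0 < e -> exists n y,
    (0 < n)%nat /\ whole_circle y /\ dS y w < e /\ dS (Nat.iter n f y) w < e).
  { intros H; apply Hnw; split; [exact I|auto]. }
  apply not_all_ex_not in H as [r H]. apply imply_to_and in H as [Hr H].
  exists w, r. repeat split; auto. intros n y Hn Hy. apply Rnot_lt_le. intros Hl'.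
  apply H. exists n, y. repeat split; auto.
Qed.

Lemma hyper_map_not_transitive f : ms_circle_map f -> ~ transitive hyper hausdorff (hyper_map f).
Proof.
  intros HS Ht. destruct (wandering_ball f HS) as [w [r [Hr [_ HW]]]].
  assert (Hw : hyper (fun y => y = w)) by (apply (hyper_finite _ (w :: nil) w); [intros x ->; left|]; auto).
  destruct (Ht _ _ r Hw Hw Hr) as [n [z [Hn [Hz [H1 H2]]]]].
  destruct (hyper_nonempty z Hz) as [z0 Hz0].
  destruct (hausdorff_lt_l z _ r (ex_intro _ z0 Hz0) (ex_intro _ w eq_refl) H1 z0 Hz0) as [b [-> Hb]].
  rewrite iter_hyper_map in H2.
  assert (Hi : hyper_map (Nat.iter n f) z (Nat.iter n f z0)) by (exists z0; auto).
  destruct (hausdorff_lt_l _ _ r (ex_intro _ _ Hi) (ex_intro _ w eq_refl) H2 _ Hi) as [b [-> Hb']].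
  specialize (HW n z0 Hn Hb). lra.
Qed.

Definition two_sided_orbit (f : S1 -> S1) (k : nat) (x z : S1) :=
  exists m, Nat.iter (k * m) f x = z \/ Nat.iter (k * m) f z = x.

Lemma two_sided_orbit_self f k x : two_sided_orbit f k x x.
Proof. exists 0%nat. left. rewrite Nat.mul_0_r. reflexivity. Qed.

Lemma two_sided_orbit_fwd f k x o : two_sided_orbit f k x o -> two_sided_orbit f k x (Nat.iter k f o).
Proof.
  intros [m [<-|Ho]].
  - exists (S m). left. rewrite <- Nat.iter_add. f_equal. lia.
  - destruct m as [|m].
    + rewrite Nat.mul_0_r in Ho. simpl in Ho. subst. exists 1%nat. left. rewrite Nat.mul_1_r. auto.
    + exists m. right. rewrite <- Nat.iter_add, <- Ho. f_equal. lia.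
Qed.

Lemma two_sided_orbit_bwd f k x o : (forall y, exists x, f x = y) ->
  two_sided_orbit f k x o -> exists p, two_sided_orbit f k x p /\ Nat.iter k f p = o.
Proof.
  intros Hsurj [m [<-|Ho]].
  - destruct m as [|m].
    + destruct (iter_surj f k Hsurj (Nat.iter (k * 0) f x)) as [p Hp]. exists p. split; auto.
      exists 1%nat. right. rewrite Nat.mul_1_r, Hp, Nat.mul_0_r. reflexivity.
    + exists (Nat.iter (k * m) f x). split; [exists m; auto|].
      rewrite <- Nat.iter_add. f_equal. lia.
  - destruct (iter_surj f k Hsurj o) as [p Hp]. exists p. split; auto.
    exists (S m). right. rewrite <- Ho, <- Hp, <- Nat.iter_add. f_equal. lia.
Qed.

Lemma iter_hyper_map_clS_orbits f k (S : S1 -> Prop) : continuousS f -> (forall y, exists x, f x = y) ->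
  let O := fun z => exists a, S a /\ two_sided_orbit f k a z in
  Nat.iter k (hyper_map f) (clS O) = clS O.
Proof.
  intros Hc Hsurj O. rewrite iter_hyper_map. apply hyper_map_clS.
  - apply continuousS_iter, Hc.
  - intros o [a [Ha Ho]]. exists a. split; auto. apply two_sided_orbit_fwd; auto.
  - intros o [a [Ha Ho]]. destruct (two_sided_orbit_bwd f k a o Hsurj Ho) as [p [Hp Hpo]].
    exists p. split; auto. exists a; auto.
Qed.

Section PeriodicOrbitClosures.
Variable f : S1 -> S1.
Hypothesis HS : ms_circle_map f.
Variable k : nat.
Hypothesis k_pos : (1 <= k)%nat.
Variables (w : S1) (r : R).
Hypothesis r_pos : 0 < r.
Hypothesis w_wandering : forall n y, (0 < n)%nat -> dS y w < r -> r <= dS (Nat.iter n f y) w.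

Let orbit_cl x := clS (two_sided_orbit f k x).

Lemma orbit_cl_fixed x : Nat.iter k (hyper_map f) (orbit_cl x) = orbit_cl x.
Proof.
  pose proof (iter_hyper_map_clS_orbits f k (fun a => a = x) (ms_cont f HS) (ms_surj f HS)) as H.
  simpl in H. unfold orbit_cl.
  replace (two_sided_orbit f k x) with (fun z => exists a, a = x /\ two_sided_orbit f k a z); auto.
  apply pred_ext. intros z. split; [intros [a [-> Ha]]; auto|intros Hz; exists x; auto].
Qed.

Lemma orbit_cl_least_period x : dS x w < r ->
  forall j, (0 < j)%nat -> (j < k)%nat -> Nat.iter j (hyper_map f) (orbit_cl x) <> orbit_cl x.
Proof.
  intros Hx j Hj1 Hj2 E.
  assert (Hxx : orbit_cl x x) by apply clS_incl, two_sided_orbit_self.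
  rewrite <- E, iter_hyper_map in Hxx. destruct Hxx as [a [Ha Hax]].
  destruct (continuousS_iter f j (ms_cont f HS) a (r - dS x w)) as [d [Hd Hc]]; [lra|].
  destruct (Ha d Hd) as [o [Ho Hao]]. rewrite dS_sym in Hao. specialize (Hc o Hao). rewrite Hax in Hc.
  assert (Hjo : dS (Nat.iter j f o) w < r) by (pose proof (dS_triangle (Nat.iter j f o) x w); lra).
  destruct Ho as [m [<-|Ho]].
  - rewrite <- Nat.iter_add in Hjo. specialize (w_wandering (j + k * m)%nat x ltac:(lia) Hx). lra.
  - destruct m as [|m].
    + rewrite Nat.mul_0_r in Ho. simpl in Ho. subst o. specialize (w_wandering j x Hj1 Hx). lra.
    + specialize (w_wandering (k * S m - j)%nat (Nat.iter j f o) ltac:(nia) Hjo).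
      rewrite <- Nat.iter_add in w_wandering.
      replace (k * S m - j + j)%nat with (k * S m)%nat in w_wandering by nia.
      rewrite Ho in w_wandering. lra.
Qed.

Lemma orbit_cl_inj x1 x2 : dS x1 w < r -> dS x2 w < r -> orbit_cl x1 = orbit_cl x2 -> x1 = x2.
Proof.
  intros H1 H2 E. apply NNPP; intros Hne.
  assert (Hx2 : orbit_cl x1 x2) by (rewrite E; apply clS_incl, two_sided_orbit_self).
  assert (Hd0 : 0 < dS x1 x2).
  { destruct (Rle_lt_or_eq_dec 0 _ (dS_ge0 x1 x2)) as [|He]; auto. exfalso; apply Hne, dS_eq0; auto. }
  set (e := Rmin (dS x1 x2) (r - dS x2 w)).
  assert (e <= dS x1 x2 /\ e <= r - dS x2 w /\ 0 < e) as [He1 [He2 He0]]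
    by (unfold e; repeat split; [apply Rmin_l|apply Rmin_r|apply Rmin_glb_lt; lra]).
  destruct (Hx2 e He0) as [o [Ho Hdo]].
  assert (How : dS o w < r) by (pose proof (dS_triangle o x2 w); rewrite (dS_sym o x2) in *; lra).
  assert (Hox : o <> x1) by (intros ->; rewrite dS_sym in Hdo; lra).
  destruct Ho as [[|m] [Ho|Ho]]; rewrite ?Nat.mul_0_r in Ho; simpl in Ho.
  - congruence.
  - congruence.
  - rewrite <- Ho in How. specialize (w_wandering (k * S m)%nat x1 ltac:(nia) H1). lra.
  - specialize (w_wandering (k * S m)%nat o ltac:(nia) How). rewrite Ho in w_wandering. lra.
Qed.

Lemma hyper_map_period_not_countable : ~ countable (fun A => has_period hyper (hyper_map f) k A).
Proof.
  intros [h Hh].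
  set (r0 := Rmin r (1/2)).
  assert (r0 <= r /\ r0 <= 1/2 /\ 0 < r0) as [Hr1 [Hr2 Hr0]]
    by (unfold r0; repeat split; [apply Rmin_l|apply Rmin_r|apply Rmin_glb_lt; lra]).
  set (x := fun t => proj (proj1_sig w + t)).
  assert (Hx : forall t, 0 < t < r0 -> dS (x t) w < r).
  { intros t Ht. unfold x. rewrite <- (proj_val w) at 2. eapply Rle_lt_trans; [apply dS_proj_le|].
    replace (proj1_sig w + t - proj1_sig w) with t by ring. rewrite Rabs_pos_eq; lra. }
  assert (Hper : forall t, 0 < t < r0 -> has_period hyper (hyper_map f) k (orbit_cl (x t))).
  { intros t Ht. repeat split; [apply clS_closed| |lia|apply orbit_cl_fixed|].
    - exists (x t). apply clS_incl, two_sided_orbit_self.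
    - intros j Hj1 Hj2. apply orbit_cl_least_period; auto. }
  apply (interval_not_countable 0 r0 (fun t => h (orbit_cl (x t))) Hr0).
  intros s t Hs Ht Hst. apply Hh, orbit_cl_inj in Hst; auto.
  apply proj_eq_iff in Hst as [z Hz].
  assert (Hz1 : -1 < IZR z < 1) by lra.
  destruct Hz1 as [Ha Hb]. apply lt_IZR in Ha. apply lt_IZR in Hb.
  replace z with 0%Z in Hz by lia. simpl in Hz. lra.
Qed.

End PeriodicOrbitClosures.

(** * Recurrence of the hyperspace map *)

Lemma per_iter f z n : per f z -> per f (Nat.iter n f z).
Proof.
  intros [_ [q [Hq Hz]]]. split; [exact I|]. exists q. split; auto. rewrite iter_comm, Hz. reflexivity.
Qed.

Lemma per_preimage f a n : per f a -> exists z, per f z /\ Nat.iter n f z = a.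
Proof.
  intros Ha. pose proof Ha as [_ [q [Hq Hqa]]].
  exists (Nat.iter ((q - 1) * n) f a). split; [apply per_iter, Ha|].
  rewrite <- Nat.iter_add. replace (n + (q - 1) * n)%nat with (n * q)%nat by nia.
  apply iter_fixed_mul; auto.
Qed.

Section TrapsShadowing.
Variable f : S1 -> S1.
Hypothesis f_unif : unif_continuousS f.
Variable N : nat.

Lemma fwd_trapping_pseudo_orbits a e : fwd_trapping (Nat.iter N f) a e ->
  exists d (j : nat) c, 0 < d /\ Nat.iter N f c = c /\
  forall i y, pseudo_orbit f d (N * (j + i)) a y -> dS y c < e.
Proof.
  intros [T [eta [j [c [Heta [Hc [HTc [Hdiam [Hinv Horb]]]]]]]]].
  destruct (pseudo_orbit_shadow f f_unif N eta Heta) as [d1 [Hd1 Hstep]].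
  destruct (pseudo_orbit_shadow f f_unif (N * j) eta Heta) as [d2 [Hd2 Hentry]].
  exists (Rmin d1 d2), j, c. split; [apply Rmin_glb_lt; auto|]. split; auto.
  assert (Htrap : forall i y, pseudo_orbit f (Rmin d1 d2) (N * (j + i)) a y -> T y).
  { induction i as [|i IH]; intros y Hy.
    - rewrite Nat.add_0_r in Hy. apply (pseudo_orbit_mono _ _ d2) in Hy; [|apply Rmin_r].
      apply Horb. rewrite dS_sym, <- iter_mul, Nat.mul_comm. auto.
    - replace (N * (j + S i))%nat with (N * (j + i) + N)%nat in Hy by nia.
      apply pseudo_orbit_split in Hy as [y1 [Hy1 Hy2]].
      apply (pseudo_orbit_mono _ _ d1) in Hy2; [|apply Rmin_l].
      apply (Hinv y1); auto. rewrite dS_sym. auto. }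
  intros i y Hy. apply Hdiam; eauto.
Qed.

Lemma bwd_trapping_pseudo_orbits a e : bwd_trapping (Nat.iter N f) a e ->
  exists d (j : nat) c, 0 < d /\ Nat.iter N f c = c /\
  forall i x, pseudo_orbit f d (N * (j + i)) x a -> dS x c < e.
Proof.
  intros [T [eta [j [c [Heta [Hc [HTc [Hdiam [Hinv Horb]]]]]]]]].
  destruct (pseudo_orbit_shadow f f_unif N eta Heta) as [d1 [Hd1 Hstep]].
  destruct (pseudo_orbit_shadow f f_unif (N * j) eta Heta) as [d2 [Hd2 Hexit]].
  exists (Rmin d1 d2), j, c. split; [apply Rmin_glb_lt; auto|]. split; auto.
  assert (Htrap : forall i x, pseudo_orbit f (Rmin d1 d2) (N * (j + i)) x a -> T x).
  { induction i as [|i IH]; intros x Hx.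
    - rewrite Nat.add_0_r in Hx. apply (pseudo_orbit_mono _ _ d2) in Hx; [|apply Rmin_r].
      apply Horb. rewrite <- iter_mul, Nat.mul_comm. auto.
    - replace (N * (j + S i))%nat with (N + N * (j + i))%nat in Hx by nia.
      apply pseudo_orbit_split in Hx as [x1 [Hx1 Hx2]].
      apply (pseudo_orbit_mono _ _ d1) in Hx1; [|apply Rmin_l].
      apply (Hinv x1); auto. }
  intros i x Hx. apply Hdiam; eauto.
Qed.

End TrapsShadowing.

Lemma per_near_image_and_preimage f w e : ms_circle_map f -> ~ per f w -> 0 < e ->
  exists n p c c', (0 < n)%nat /\ per f c /\ per f c' /\ Nat.iter n f p = w /\
  dS (Nat.iter n f w) c < e /\ dS p c' < e.
Proof.
  intros HS Hw He. pose proof (continuousS_unif f (ms_cont f HS)) as Hu.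
  destruct (ms_traps f HS) as [N [HN Htraps]]. destruct (Htraps w e He Hw) as [Hfwd Hbwd].
  destruct (fwd_trapping_pseudo_orbits f Hu N w e Hfwd) as [d [j [c [Hd [Hc Hnear]]]]].
  destruct (bwd_trapping_pseudo_orbits f Hu N w e Hbwd) as [d' [j' [c' [Hd' [Hc' Hnear']]]]].
  set (n := (N * (j + S j'))%nat).
  destruct (iter_surj f n (ms_surj f HS) w) as [p Hp].
  assert (Hper : forall c, Nat.iter N f c = c -> per f c) by (intros c0 H0; split; [exact I|eauto]).
  exists n, p, c, c'. split; [unfold n; nia|]. do 3 (split; [auto|]). split.
  - apply (Hnear (S j')), pseudo_orbit_orbit; auto.
  - apply (Hnear' (S j)). replace (N * (j' + S j))%nat with n by (unfold n; nia).
    rewrite <- Hp. apply pseudo_orbit_orbit; auto.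
Qed.

Section WanderingPoint.
Variable f : S1 -> S1.
Hypothesis HS : ms_circle_map f.
Variable w : S1.
Hypothesis w_not_per : ~ per f w.

Let A := fun y => y = w \/ per f y.

Lemma hyper_wandering_per : hyper A.
Proof.
  destruct (ms_per_finite f HS) as [l Hl].
  apply (hyper_finite _ (w :: l) w); [intros x [->|Hx]; [left|right]|left]; auto.
Qed.

Lemma nonwandering_wandering_per : nonwandering hyper hausdorff (hyper_map f) A.
Proof.
  split; [apply hyper_wandering_per|]. intros e He.
  destruct (per_near_image_and_preimage f w (e/2) HS w_not_per ltac:(lra))
    as [n [p [c [c' [Hn [Hc [Hc' [Hp [Hfw Hpc]]]]]]]]].
  destruct (ms_per_finite f HS) as [l Hl].
  set (Y := fun z => z = w \/ z = p \/ per f z).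
  assert (HY : hyper Y) by (apply (hyper_finite _ (w :: p :: l) w);
    [intros x [->|[->|Hx]]; simpl; auto|left; auto]).
  assert (HA : nonempty A) by (exists w; left; auto).
  exists n, Y. split; [exact Hn|]. split; [exact HY|]. split; [|rewrite iter_hyper_map];
    (apply (hausdorff_lt _ _ (e/2)); [|auto|lra| |]).
  - apply hyper_nonempty, HY.
  - intros z [->|[->|Hz]]; [exists w| exists c' | exists z]; unfold A; rewrite ?dS_xx; split; auto; lra.
  - intros a [Ha|Ha]; exists a; rewrite dS_xx; unfold Y; split; auto; lra.
  - exists (Nat.iter n f w), w. split; [left|]; auto.
  - intros z' [z [[->|[->|Hz]] <-]].
    + exists c. unfold A. split; auto; lra.
    + exists w. rewrite Hp, dS_xx. split; [left|lra]; auto.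
    + exists (Nat.iter n f z). rewrite dS_xx. split; [right; apply per_iter|lra]; auto.
  - intros a [->|Ha].
    + exists (Nat.iter n f p). rewrite Hp, dS_xx. split; [exists p; unfold Y; auto|lra].
    + destruct (per_preimage f a n Ha) as [z [Hz <-]].
      exists (Nat.iter n f z). rewrite dS_xx. split; [exists z; unfold Y; auto|lra].
Qed.

Lemma not_recurrent_wandering_per r : 0 < r ->
  (forall n y, (0 < n)%nat -> dS y w < r -> r <= dS (Nat.iter n f y) w) ->
  ~ recurrent hyper hausdorff (hyper_map f) A.
Proof.
  intros Hr Hwand [_ Hrec]. destruct (ms_per_finite f HS) as [l Hl].
  assert (Hgap : exists eC, 0 < eC /\ forall c, per f c -> eC <= dS w c).
  { apply NNPP; intros Hn. apply w_not_per, (closedS_finite _ l Hl). intros e He.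
    apply NNPP; intros Hn'. apply Hn. exists e. split; auto. intros c Hc.
    apply Rnot_lt_le. intros Hl'. apply Hn'. exists c; auto. }
  destruct Hgap as [eC [HeC Hgap]].
  destruct (Hrec (Rmin r eC)) as [n [Hn Hh]]; [apply Rmin_glb_lt; auto|].
  pose proof (Rmin_l r eC); pose proof (Rmin_r r eC).
  rewrite iter_hyper_map in Hh.
  assert (Hi : hyper_map (Nat.iter n f) A (Nat.iter n f w)) by (exists w; split; [left|]; auto).
  destruct (hausdorff_lt_r _ A _ (ex_intro _ _ Hi) (ex_intro _ w (or_introl eq_refl)) Hh w (or_introl eq_refl))
    as [a [[z [[->|Hz] <-]] Haw]].
  - specialize (Hwand n w Hn ltac:(rewrite dS_xx; lra)). lra.
  - specialize (Hgap _ (per_iter f z n Hz)). rewrite dS_sym in Hgap. lra.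
Qed.

End WanderingPoint.

Lemma recurrent_ne_nonwandering f : ms_circle_map f ->
  ~ (forall A, recurrent hyper hausdorff (hyper_map f) A <-> nonwandering hyper hausdorff (hyper_map f) A).
Proof.
  intros HS Hiff. destruct (wandering_ball f HS) as [w [r [Hr [Hw Hwand]]]].
  apply (not_recurrent_wandering_per f HS w Hw r Hr Hwand), Hiff.
  apply nonwandering_wandering_per; auto.
Qed.

Lemma in_closure_per_nonwandering f A :
  in_closure_per hyper hausdorff (hyper_map f) A -> nonwandering hyper hausdorff (hyper_map f) A.
Proof.
  intros [HA H]. split; auto. intros e He. destruct (H e He) as [y [[Hy [n [Hn Hyn]]] Hd]].
  exists n, y. rewrite Hyn, hausdorff_sym. auto.
Qed.

(* The chain is [A, f(Y), f^2(Y), ..., f^(n-1)(Y), A] for a set [Y] close to [A] with [f^n(Y)]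
   close to [A]. *)
Lemma nonwandering_chain_recurrent f A : continuousS f ->
  nonwandering hyper hausdorff (hyper_map f) A -> chain_recurrent hyper hausdorff (hyper_map f) A.
Proof.
  intros Hc [HA H]. split; auto. intros e He.
  destruct (hausdorff_hyper_map_cont f (continuousS_unif f Hc) (e/2) ltac:(lra)) as [d [Hd Hcont]].
  destruct (H (Rmin d (e/4))) as [n [Y [Hn [HY [H1 H2]]]]]; [apply Rmin_glb_lt; lra|].
  pose proof (Rmin_l d (e/4)); pose proof (Rmin_r d (e/4)).
  set (c := fun i => if Nat.eq_dec i 0 then A else if Nat.eq_dec i n then A
                     else Nat.iter i (hyper_map f) Y).
  assert (Hiter : forall i, hyper (Nat.iter i (hyper_map f) Y)) by (intros i; apply hyper_iter; auto).
  assert (HfA : hyper (hyper_map f A)) by (apply hyper_hyper_map; auto).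
  assert (HfAY : hausdorff (hyper_map f A) (hyper_map f Y) < e/2).
  { apply Hcont; try apply hyper_nonempty; auto. rewrite hausdorff_sym. lra. }
  exists n, c. split; auto.
  split; [unfold c; destruct Nat.eq_dec; congruence|].
  split; [unfold c; destruct Nat.eq_dec; [lia|]; destruct Nat.eq_dec; congruence|].
  intros i Hi. unfold c. destruct (Nat.eq_dec i 0) as [->|Hi0].
  - split; auto. destruct (Nat.eq_dec 1 0) as [|_]; [lia|]. destruct (Nat.eq_dec 1 n) as [<-|Hn1].
    + simpl in H2. pose proof (hausdorff_triangle _ _ _ _ _ (hyper_nonempty _ HfA)
        (hyper_nonempty _ (hyper_hyper_map f Y Hc HY)) (hyper_nonempty _ HA) HfAY H2).
      lra.
    + simpl. lra.
  - destruct (Nat.eq_dec i n) as [|_]; [lia|]. split; auto.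
    destruct (Nat.eq_dec (S i) 0) as [|_]; [lia|]. destruct (Nat.eq_dec (S i) n) as [<-|HSn].
    + simpl in *. lra.
    + simpl. apply hausdorff_xx_lt; [apply hyper_nonempty, hyper_hyper_map, Hiter; auto|lra].
Qed.

Definition pseudo_invariant f (A : S1 -> Prop) d n :=
  (forall x, A x -> exists y, A y /\ pseudo_orbit f d n x y) /\
  (forall y, A y -> exists x, A x /\ pseudo_orbit f d n x y).

Lemma chain_pseudo_invariant f A d n (c : nat -> S1 -> Prop) : hyper A -> c 0%nat = A -> c n = A ->
  (forall i, (i < n)%nat -> hyper (c i) /\ hausdorff (hyper_map f (c i)) (c (S i)) < d) ->
  pseudo_invariant f A d n.
Proof.
  intros HA H0 Hn Hi.
  assert (Hne : forall i, (i <= n)%nat -> nonempty (c i)).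
  { intros i Hl. apply hyper_nonempty. destruct (Nat.eq_dec i n) as [->|]; [rewrite Hn; exact HA|apply Hi; lia]. }
  assert (Hnf : forall i, (i <= n)%nat -> nonempty (hyper_map f (c i))).
  { intros i Hl. destruct (Hne i Hl) as [x Hx]. exists (f x), x; auto. }
  split.
  - assert (H : forall i, (i <= n)%nat -> forall x, A x -> exists y, c i y /\ pseudo_orbit f d i x y).
    { induction i as [|i IH]; intros Hl x Hx.
      - exists x. rewrite H0. split; auto. apply pseudo_orbit_refl.
      - destruct (IH ltac:(lia) x Hx) as [y [Hy Hr]].
        destruct (hausdorff_lt_l _ _ d (Hnf i ltac:(lia)) (Hne (S i) Hl) (proj2 (Hi i ltac:(lia)))
          (f y) (ex_intro _ y (conj Hy eq_refl))) as [y' [Hy' Hd]].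
        exists y'. split; auto. apply (pseudo_orbit_snoc _ _ _ _ y); auto. }
    intros x Hx. destruct (H n (le_n n) x Hx) as [y [Hy Hr]]. rewrite Hn in Hy. exists y; auto.
  - assert (H : forall i, (i <= n)%nat -> forall y, c i y -> exists x, A x /\ pseudo_orbit f d i x y).
    { induction i as [|i IH]; intros Hl y Hy.
      - exists y. rewrite H0 in Hy. split; auto. apply pseudo_orbit_refl.
      - destruct (hausdorff_lt_r _ _ d (Hnf i ltac:(lia)) (Hne (S i) Hl) (proj2 (Hi i ltac:(lia))) y Hy)
          as [p [[z [Hz <-]] Hd]].
        destruct (IH ltac:(lia) z Hz) as [x [Hx Hr]].
        exists x. split; auto. apply (pseudo_orbit_snoc _ _ _ _ z); auto. }
    intros y Hy. apply H; [lia|]. rewrite Hn; auto.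
Qed.

Lemma pseudo_invariant_mul f A d n q : pseudo_invariant f A d n -> pseudo_invariant f A d (q * n).
Proof.
  intros [Hf Hb]. induction q as [|q [IHf IHb]].
  - split; [intros x Hx; exists x|intros y Hy; exists y]; split; auto; apply pseudo_orbit_refl.
  - split.
    + intros x Hx. destruct (Hf x Hx) as [y1 [Hy1 R1]]. destruct (IHf y1 Hy1) as [y [Hy R2]].
      exists y. split; auto. apply (pseudo_orbit_app _ _ _ _ _ y1); auto.
    + intros y Hy. destruct (IHb y Hy) as [x1 [Hx1 R2]]. destruct (Hb x1 Hx1) as [x [Hx R1]].
      exists x. split; auto. apply (pseudo_orbit_app _ _ _ _ _ x1); auto.
Qed.

Lemma pseudo_invariant_mono f A d d' n : d <= d' -> pseudo_invariant f A d n -> pseudo_invariant f A d' n.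
Proof.
  intros Hd [H1 H2]. split.
  - intros x Hx. destruct (H1 x Hx) as [y [Hy Hr]]. exists y. split; auto. apply (pseudo_orbit_mono _ d); auto.
  - intros y Hy. destruct (H2 y Hy) as [x [Hx Hr]]. exists x. split; auto. apply (pseudo_orbit_mono _ d); auto.
Qed.

Definition orbit_stays_near f (A : S1 -> Prop) a e J d := forall n, (0 < n)%nat ->
  pseudo_invariant f A d n -> forall m, (0 < m)%nat ->
  (exists a', A a' /\ dS (Nat.iter (m * (J * n)) f a) a' < e) /\
  (forall y, Nat.iter (m * (J * n)) f y = a -> exists a', A a' /\ dS y a' < e).

Lemma orbit_stays_near_mul f A a e J d q d' : orbit_stays_near f A a e J d -> (0 < q)%nat -> d' <= d ->
  orbit_stays_near f A a e (J * q) d'.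
Proof.
  intros H Hq Hd n Hn Hinv m Hm.
  replace (m * (J * q * n))%nat with ((m * q) * (J * n))%nat by nia.
  apply H; auto; [apply (pseudo_invariant_mono _ _ d'); auto|nia].
Qed.

Lemma orbit_stays_near_point f A a e : ms_circle_map f -> A a -> 0 < e ->
  exists J d, (0 < J)%nat /\ 0 < d /\ orbit_stays_near f A a e J d.
Proof.
  intros HS Ha He. destruct (classic (per f a)) as [[_ [q [Hq Hqa]]]|Hna].
  - exists q, 1. split; auto. split; [lra|]. intros n Hn Hinv m Hm.
    assert (Ht : Nat.iter (m * (q * n)) f a = a).
    { replace (m * (q * n))%nat with ((m * n) * q)%nat by nia. apply iter_fixed_mul; auto. }
    split.
    + exists a. rewrite Ht, dS_xx. auto.
    + intros y Hy. rewrite <- Ht in Hy. apply (iter_inj f _ (ms_inj f HS)) in Hy.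
      subst. exists a. rewrite dS_xx; auto.
  - pose proof (continuousS_unif f (ms_cont f HS)) as Hu.
    destruct (ms_traps f HS) as [N [HN Htraps]].
    destruct (Htraps a (e/2) ltac:(lra) Hna) as [Hfwd Hbwd].
    destruct (fwd_trapping_pseudo_orbits f Hu N a _ Hfwd) as [d1 [j [c [Hd1 [_ Hnear]]]]].
    destruct (bwd_trapping_pseudo_orbits f Hu N a _ Hbwd) as [d2 [j' [c' [Hd2 [_ Hnear']]]]].
    set (d := Rmin d1 d2).
    assert (d <= d1 /\ d <= d2 /\ 0 < d) as [Hdd1 [Hdd2 Hd]]
      by (unfold d; repeat split; [apply Rmin_l|apply Rmin_r|apply Rmin_glb_lt; auto]).
    exists (N * (S j * S j'))%nat, d. split; [nia|]. split; auto.
    intros n Hn Hinv m Hm. set (P := (S j * S j' * m * n)%nat).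
    set (K := (m * (N * (S j * S j') * n))%nat).
    assert (HK1 : K = (N * (j + (P - j)))%nat) by (unfold K, P; nia).
    assert (HK2 : K = (N * (j' + (P - j')))%nat) by (unfold K, P; nia).
    destruct (pseudo_invariant_mul f A d n (m * (N * (S j * S j'))) Hinv) as [Hf Hb].
    replace (m * (N * (S j * S j')) * n)%nat with K in Hf, Hb by (unfold K; nia).
    split.
    + destruct (Hf a Ha) as [y [Hy Hpo]]. exists y. split; auto.
      assert (dS (Nat.iter K f a) c < e/2 /\ dS y c < e/2); [|rewrite (dS_sym y c) in *;
        pose proof (dS_triangle (Nat.iter K f a) c y); lra].
      rewrite HK1 in *. split; apply (Hnear (P - j)%nat); auto.
      * apply pseudo_orbit_orbit; auto.
      * apply (pseudo_orbit_mono _ d); auto.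
    + intros y0 Hy0. destruct (Hb a Ha) as [x [Hx Hpo]]. exists x. split; auto.
      assert (dS y0 c' < e/2 /\ dS x c' < e/2); [|rewrite (dS_sym x c') in *;
        pose proof (dS_triangle y0 c' x); lra].
      rewrite HK2 in *. split; apply (Hnear' (P - j')%nat); auto.
      * rewrite <- Hy0. apply pseudo_orbit_orbit; auto.
      * apply (pseudo_orbit_mono _ d); auto.
Qed.

Lemma orbit_stays_near_list f A e (L : list S1) : ms_circle_map f -> (forall a, In a L -> A a) -> 0 < e ->
  exists J d, (0 < J)%nat /\ 0 < d /\ forall a, In a L -> orbit_stays_near f A a e J d.
Proof.
  intros HS HL He. induction L as [|a L IH].
  - exists 1%nat, 1. split; [lia|]. split; [lra|]. intros a [].
  - destruct IH as [J [d [HJ [Hd H]]]]; [intros b Hb; apply HL; right; auto|].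
    destruct (orbit_stays_near_point f A a e HS (HL a (or_introl eq_refl)) He) as [Ja [da [HJa [Hda Ha]]]].
    exists (J * Ja)%nat, (Rmin d da). split; [nia|]. split; [apply Rmin_glb_lt; auto|].
    intros b [<-|Hb].
    + rewrite Nat.mul_comm. apply orbit_stays_near_mul with da; auto. apply Rmin_r.
    + apply orbit_stays_near_mul with d; auto. apply Rmin_l.
Qed.

Lemma grid_near (M : nat) : (0 < M)%nat ->
  forall x : S1, exists i, (i < M)%nat /\ dS x (proj (INR i / INR M)) < / INR M.
Proof.
  intros HM x. pose proof (S1_val_bounds x) as Hx.
  assert (HMr : 0 < INR M) by (apply lt_0_INR; auto).
  set (k := Int_part (proj1_sig x * INR M)).
  destruct (base_Int_part (proj1_sig x * INR M)) as [Hk1 Hk2]. fold k in Hk1, Hk2.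
  assert (Hk0 : (0 <= k)%Z).
  { apply Z.lt_succ_r, lt_IZR. rewrite succ_IZR. nra. }
  assert (HkM : (k < Z.of_nat M)%Z) by (apply lt_IZR; rewrite <- INR_IZR_INZ; nra).
  exists (Z.to_nat k). split; [lia|].
  rewrite <- (proj_val x). eapply Rle_lt_trans; [apply dS_proj_le|].
  rewrite INR_IZR_INZ, Z2Nat.id by lia.
  replace (proj1_sig x - IZR k / INR M) with ((proj1_sig x * INR M - IZR k) / INR M) by (field; lra).
  unfold Rdiv. rewrite Rabs_mult, Rabs_pos_eq, Rabs_pos_eq by (try apply Rlt_le, Rinv_0_lt_compat; lra).
  assert (0 < / INR M) by (apply Rinv_0_lt_compat; auto). nra.
Qed.

Lemma finite_net (A : S1 -> Prop) e : 0 < e ->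
  exists L, (forall a, In a L -> A a) /\ (forall a, A a -> exists a', In a' L /\ dS a a' < e).
Proof.
  intros He. destruct (inv_succ_lt (e/2)) as [N0 HN0]; [lra|].
  set (M := S N0).
  assert (HMe : / INR M < e/2) by (unfold M; rewrite S_INR; apply HN0; lia).
  set (gp := fun i : nat => proj (INR i / INR M)).
  assert (Hlist : forall K, exists L, (forall a, In a L -> A a) /\ forall i, (i < K)%nat ->
     (exists a, A a /\ dS a (gp i) < e/2) -> exists a', In a' L /\ dS a' (gp i) < e/2).
  { induction K as [|K [L [HL1 HL2]]].
    - exists nil. split; [intros a []|intros i Hi; lia].
    - destruct (classic (exists a, A a /\ dS a (gp K) < e/2)) as [[a [Ha Hda]]|Hn].
      + exists (a :: L). split; [intros b [<-|Hb]; auto|].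
        intros i Hi Hex. destruct (Nat.eq_dec i K) as [->|Hne].
        * exists a. split; [left|]; auto.
        * destruct (HL2 i ltac:(lia) Hex) as [a' [Ha' Hd]]. exists a'; split; [right|]; auto.
      + exists L. split; auto. intros i Hi Hex. destruct (Nat.eq_dec i K) as [->|Hne]; [contradiction|].
        apply HL2; auto; lia. }
  destruct (Hlist M) as [L [HL1 HL2]]. exists L. split; auto.
  intros a Ha. destruct (grid_near M ltac:(unfold M; lia) a) as [i [Hi Hd]]. fold (gp i) in Hd.
  destruct (HL2 i Hi) as [a' [Ha' Hd']]; [exists a; split; auto; lra|].
  exists a'. split; auto. pose proof (dS_triangle a (gp i) a'). rewrite (dS_sym (gp i) a') in *. lra.
Qed.

(* The approximating periodic set is the closure of the two-sided [f^K]-orbits of a finite net of [A]. *)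
Lemma chain_recurrent_in_closure_per f A : ms_circle_map f ->
  chain_recurrent hyper hausdorff (hyper_map f) A -> in_closure_per hyper hausdorff (hyper_map f) A.
Proof.
  intros HS [HA Hcr]. split; auto. intros e He.
  destruct (finite_net A (e/4)) as [L [HL1 HL2]]; [lra|].
  destruct (orbit_stays_near_list f A (e/4) L HS HL1) as [J [d [HJ [Hd Hnear]]]]; [lra|].
  destruct (Hcr d Hd) as [n [c [Hn [Hc0 [Hcn Hci]]]]].
  pose proof (chain_pseudo_invariant f A d n c HA Hc0 Hcn Hci) as Hinv.
  set (K := (J * n)%nat).
  set (O := fun z => exists a, In a L /\ two_sided_orbit f K a z).
  pose proof HA as [_ [a0 Ha0]]. destruct (HL2 a0 Ha0) as [b0 [Hb0 _]].
  assert (HOL : forall a, In a L -> O a) by (intros a Ha; exists a; split; auto; apply two_sided_orbit_self).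
  exists (clS O). split.
  - split; [apply (hyper_clS _ b0), HOL; auto|].
    exists K. split; [unfold K; nia|]. apply (iter_hyper_map_clS_orbits f K (fun a => In a L) (ms_cont f HS) (ms_surj f HS)).
  - apply (hausdorff_lt _ _ (e/2)); [exists a0; auto|exists b0; apply clS_incl, HOL; auto|lra| |].
    + intros a Ha. destruct (HL2 a Ha) as [a' [Ha' Hd']]. exists a'. split; [apply clS_incl, HOL; auto|lra].
    + intros b Hb. destruct (Hb (e/4) ltac:(lra)) as [o [[a' [Ha' [m Hm]]] Hbo]].
      assert (Hclose : exists a'', A a'' /\ dS o a'' < e/4).
      { destruct m as [|m].
        - rewrite Nat.mul_0_r in Hm. simpl in Hm.
          exists a'. split; [apply HL1; auto|]. destruct Hm as [<-| ->]; rewrite dS_xx; lra.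
        - destruct (Hnear a' Ha' n Hn Hinv (S m) ltac:(lia)) as [HF HB].
          replace (K * S m)%nat with (S m * (J * n))%nat in Hm by (unfold K; nia).
          destruct Hm as [<-|Hm]; [|apply HB]; auto. }
      destruct Hclose as [a'' [Ha'' Hd'']]. exists a''. split; auto.
      pose proof (dS_triangle a'' o b). rewrite (dS_sym a'' o), (dS_sym o b) in *. lra.
Qed.

Theorem proposition3p1 (f : S1 -> S1) (Hf : MorseSmale f) :
  (forall k : nat, (1 <= k)%nat ->
     ~ countable (fun A => has_period hyper (hyper_map f) k A)) /\
  (~ (forall A, recurrent hyper hausdorff (hyper_map f) A <->
                nonwandering hyper hausdorff (hyper_map f) A) /\
   (forall A, (nonwandering hyper hausdorff (hyper_map f) A <->
               in_closure_per hyper hausdorff (hyper_map f) A) /\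
              (in_closure_per hyper hausdorff (hyper_map f) A <->
               chain_recurrent hyper hausdorff (hyper_map f) A))) /\
  ~ transitive hyper hausdorff (hyper_map f).
Proof.
  pose proof (MorseSmale_ms_circle_map f Hf) as HS.
  pose proof (ms_cont f HS) as Hc.
  split; [|split; [split|]].
  - intros k Hk. destruct (wandering_ball f HS) as [w [r [Hr [_ Hwand]]]].
    exact (hyper_map_period_not_countable f HS k Hk w r Hr Hwand).
  - apply recurrent_ne_nonwandering, HS.
  - intros A. pose proof (nonwandering_chain_recurrent f A Hc) as Hnw_cr.
    pose proof (chain_recurrent_in_closure_per f A HS) as Hcr_cl.
    pose proof (in_closure_per_nonwandering f A) as Hcl_nw.
    tauto.
  - apply hyper_map_not_transitive, HS.
Qed.
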